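(* Let $R_s>0$, $\lambda=2^{R_s}$, and let $\gamma_d,\gamma_e$ be independent, where $\gamma_d$ is generalized-$K$ distributed with $k_d=m_d=1$ and mean $\overline\gamma_d>0$ (CDF $F_{\gamma_d}(x)=G_{1,3}^{2,1}\!\left(\frac{x}{\overline\gamma_d}\,\middle|\,{1\atop 1,1,0}\right)$), and $\gamma_e$ is generalized-$K$ distributed with parameters $k_e>0,m_e>0$ and mean $\overline\gamma_e>0$. Let $\sigma_e^2$ be the variance of $\gamma_e$, $P(x)=F_{\gamma_d}(\lambda-1+\lambda x)$, $\widetilde P_{\rm sop}(\overline\gamma_d):=P(\overline\gamma_e)+\frac{\sigma_e^2}{2}P''(\overline\gamma_e)$, and $a=\lambda-1+\lambda\overline\gamma_e$. Then, as $\overline\gamma_d\to\infty$ with all other parameters fixed, $$\widetilde P_{\rm sop}(\overline\gamma_d)=\overline\gamma_d^{-1}\left(\frac{\psi(1)+\psi(2)-\ln\frac{a}{\overline\gamma_d}}{a^{-1}}-\frac{\overline\gamma_e^2\lambda^2\left(\frac{(k_e+1)(m_e+1)}{k_em_e}-1\right)}{2a}\right)+o(\overline\gamma_d^{-1}).$$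
   Context: $\psi$ is the digamma function and $G^{m,n}_{p,q}$ the standard Meijer G-function. The generalized-$K$ distribution with parameters $k,m$ and mean $\overline\gamma$ is that of $\overline\gamma XY$ with $X,Y$ independent unit-mean Gamma variables of shapes $k$ and $m$ (for $k=m=1$ this is the $K$-distribution). $\widetilde P_{\rm sop}$ is the second-order Taylor approximation of the secrecy outage probability $\mathbb{E}\{F_{\gamma_d}(\lambda-1+\lambda\gamma_e)\}$ around the mean of $\gamma_e$. *)

From Stdlib Require Import Reals.
From Coquelicot Require Import Coquelicot.
Open Scope R_scope.

Definition Gamma_fun (s : R) : R :=
  RInt_gen (fun t => Rpower t (s - 1) * exp (- t)) (at_right 0) (Rbar_locally p_infty).

Definition digamma (s : R) : R := Derive Gamma_fun s / Gamma_fun s.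

Definition gamma_pdf (k x : R) : R :=
  Rpower k k * Rpower x (k - 1) * exp (- (k * x)) / Gamma_fun k.

(* Variance of the generalized-K variable gbar * X * Y, X ~ Gamma(k), Y ~ Gamma(m)
   independent unit-mean: E[(gbar X Y)^2] - (E[gbar X Y])^2, with mean gbar. *)
Definition genK_variance (k m gbar : R) : R :=
  RInt_gen (fun x =>
      RInt_gen (fun y => (gbar * x * y) ^ 2 * gamma_pdf k x * gamma_pdf m y)
               (at_right 0) (Rbar_locally p_infty))
    (at_right 0) (Rbar_locally p_infty)
  - gbar ^ 2.

(* CDF of the K-distribution (k = m = 1) with mean gbar, for x >= 0:
   P(gbar X Y <= x) = int_0^oo e^(-t) (1 - e^(-x/(gbar t))) dt,
   X, Y independent unit-mean exponentials.  This equals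
   G^{2,1}_{1,3}(x/gbar | 1 ; 1,1,0). *)
Definition genK11_cdf (gbar x : R) : R :=
  RInt_gen (fun t => exp (- t) * (1 - exp (- (x / (gbar * t)))))
    (at_right 0) (Rbar_locally p_infty).

(* Write z = x / gd.  The CDF of gamma_d at x is F(z) = int_0^oo e^(-t) (1 - e^(-z/t)) dt, and
   differentiating under the integral sign gives F' = M_1 and F'' = - M_2, where
   M_n(z) = int_0^oo e^(-t - z/t) t^(-n) dt; the substitution t -> z/t yields
   z M_2(z) = M_0(z) = 1 - F(z).  With z = a / gd this turns Ptilde_sop into
   F(z) - sigma_e^2 lambda^2 (1 - F(z)) / (2 a gd), so the theorem reduces to the expansion
   F(z) = z (psi(1) + psi(2) - ln z) + o(z) as z -> 0+, together with
   sigma_e^2 = gbar_e^2 ((k+1)(m+1)/(k m) - 1), which follows from E[X^2] = (k+1)/k for a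
   unit-mean Gamma(k) variable X.

   For the expansion, integration by parts and the same substitution give
   M_1(z) = 2 A(z) - ln z (1 - F(z)) with A(z) = int_0^oo ln t e^(-t - z/t) dt.  As z -> 0+,
   A(z) tends to int_0^oo ln t e^(-t) dt = Gamma'(1), and psi(1) + psi(2) = 1 + 2 Gamma'(1).
   Hence E(z) = F(z) - z (psi(1) + psi(2) - ln z) satisfies E(0+) = E'(0+) = 0, and
   E(z) = o(z) by the mean value theorem. *)

From Stdlib Require Import Reals Lra Psatz FunctionalExtensionality.
From Coquelicot Require Import Coquelicot.
Open Scope R_scope.

Lemma ball_R (x e y : R) : ball x e y <-> Rabs (y - x) < e.
Proof. reflexivity. Qed.

Lemma at_right_0_lt (d : R) : 0 < d -> at_right 0 (fun x => 0 < x < d).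
Proof.
  intros Hd. exists (mkposreal d Hd). intros y Hy Hpos.
  rewrite ball_R in Hy; apply Rabs_def2 in Hy. simpl in Hy. lra.
Qed.

Lemma filterlim_at_right_0_continuous (f : R -> R) :
  continuous f 0 -> filterlim f (at_right 0) (locally (f 0)).
Proof. intros Hf. eapply filterlim_filter_le_1; [apply filter_le_within | exact Hf]. Qed.

Section Limits.

Context {T : Type} {F : (T -> Prop) -> Prop} {FF : Filter F}.

Lemma filterlim_Rplus (f g : T -> R) (a b : R) :
  filterlim f F (locally a) -> filterlim g F (locally b) ->
  filterlim (fun x => f x + g x) F (locally (a + b)).
Proof. intros Hf Hg. exact (filterlim_comp_2 _ _ Rplus Hf Hg (filterlim_plus a b)). Qed.

Lemma filterlim_Rmult_l (c : R) (f : T -> R) (a : R) :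
  filterlim f F (locally a) -> filterlim (fun x => c * f x) F (locally (c * a)).
Proof. intros Hf. eapply filterlim_comp; [exact Hf | exact (filterlim_scal_r c a)]. Qed.

Lemma filterlim_Rplus_0 (f g : T -> R) :
  filterlim f F (locally 0) -> filterlim g F (locally 0) ->
  filterlim (fun x => f x + g x) F (locally 0).
Proof. intros Hf Hg. rewrite <- (Rplus_0_r 0). exact (filterlim_Rplus f g 0 0 Hf Hg). Qed.

Lemma filterlim_Rmult_l_0 (c : R) (f : T -> R) :
  filterlim f F (locally 0) -> filterlim (fun x => c * f x) F (locally 0).
Proof. intros Hf. rewrite <- (Rmult_0_r c). exact (filterlim_Rmult_l c f 0 Hf). Qed.

Lemma filterlim_0_Rabs_le (f g : T -> R) :
  F (fun x => Rabs (f x) <= g x) -> filterlim g F (locally 0) ->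
  filterlim f F (locally 0).
Proof.
  intros Hfg Hg. apply (filterlim_le_le (fun x => -1 * g x) f g (Finite 0)).
  - generalize Hfg. apply filter_imp. intros x Hx.
    apply Rabs_le_between in Hx. lra.
  - exact (filterlim_Rmult_l_0 (-1) g Hg).
  - exact Hg.
Qed.

End Limits.

Lemma filterlim_Rmult_at_right_0 (c : R) :
  0 < c -> filterlim (fun x => c * x) (at_right 0) (at_right 0).
Proof.
  intros Hc P [d Hd]. exists (mkposreal (d / c) (Rdiv_lt_0_compat _ _ (cond_pos d) Hc)).
  intros y Hy Hpos. simpl in Hy. rewrite ball_R, Rminus_0_r in Hy.
  apply Hd; [| nra]. rewrite ball_R, Rminus_0_r, Rabs_mult, (Rabs_right c) by lra.
  apply (Rmult_lt_compat_l c) in Hy; [| exact Hc].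
  replace (c * (d / c)) with (pos d) in Hy by (field; lra). exact Hy.
Qed.

Lemma filterlim_Rmult_pinfty (c : R) :
  0 < c -> filterlim (fun x => c * x) (Rbar_locally p_infty) (Rbar_locally p_infty).
Proof.
  intros Hc P [N HN]. exists (N / c). intros x Hx. apply HN.
  apply (Rmult_lt_compat_l c) in Hx; [| exact Hc].
  replace (c * (N / c)) with N in Hx by (field; lra). exact Hx.
Qed.

Lemma filterlim_Rdiv_at_right_0 (w : R) :
  0 < w -> filterlim (fun x => w / x) (at_right 0) (Rbar_locally p_infty).
Proof.
  intros Hw. exact (filterlim_comp _ _ _ Rinv (Rmult w) _ (Rbar_locally p_infty) _
    filterlim_Rinv_0_right (filterlim_Rmult_pinfty w Hw)).
Qed.

Lemma filterlim_Rdiv_pinfty (w : R) :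
  0 < w -> filterlim (fun x => w / x) (Rbar_locally p_infty) (at_right 0).
Proof.
  intros Hw P [d Hd]. pose proof (cond_pos d) as Hd0.
  exists (w / d). intros x Hx.
  assert (Hx0 : 0 < x) by (pose proof (Rdiv_lt_0_compat w d Hw Hd0); lra).
  apply Hd; [| now apply Rdiv_lt_0_compat].
  rewrite ball_R, Rminus_0_r, Rabs_right by (apply Rle_ge, Rlt_le, Rdiv_lt_0_compat; lra).
  apply (Rmult_lt_compat_l d) in Hx; [| exact Hd0].
  replace (d * (w / d)) with w in Hx by (field; lra).
  apply (Rmult_lt_reg_r x); [exact Hx0 |]. replace (w / x * x) with w by (field; lra). exact Hx.
Qed.

Lemma filterlim_div_of_derive_at_right_0 (E E' : R -> R) :
  (forall z, 0 < z -> is_derive E z (E' z)) ->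
  filterlim E (at_right 0) (locally 0) -> filterlim E' (at_right 0) (locally 0) ->
  filterlim (fun z => E z / z) (at_right 0) (locally 0).
Proof.
  intros HD HE HE'. apply filterlim_locally. intros eps.
  assert (He : 0 < eps / 2) by (destruct eps; simpl; lra).
  destruct (proj1 (filterlim_locally _ _) HE' (mkposreal _ He)) as [d Hd].
  assert (Hd2 : 0 < d / 2) by (pose proof (cond_pos d); lra).
  generalize (at_right_0_lt (d / 2) Hd2). apply filter_imp. intros z Hz.
  assert (Hmvt : forall y, 0 < y < z -> Rabs (E z - E y) <= eps / 2 * z).
  { intros y Hy.
    destruct (MVT_cor4 E E' z (z - y)) with (b := y) as [c [Hc1 Hc2]].
    { intros c Hc. apply HD. apply Rabs_le_between' in Hc. lra. }
    { rewrite Rabs_left by lra. lra. }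
    rewrite (Rabs_left (y - z)) in Hc2 by lra. apply Rabs_le_between' in Hc2.
    assert (HE'c : Rabs (E' c) < eps / 2).
    { rewrite <- (Rminus_0_r (E' c)). rewrite <- ball_R.
      apply Hd; [rewrite ball_R; rewrite Rminus_0_r, Rabs_right |]; lra. }
    rewrite <- Rabs_Ropp, Ropp_minus_distr, Hc1, Rabs_mult, (Rabs_left (y - z)) by lra.
    apply Rmult_le_compat; try lra; apply Rabs_pos. }
  assert (Hlim : filterlim (fun y => Rabs (E z - E y)) (at_right 0) (locally (Rabs (E z - 0)))).
  { apply (filterlim_comp _ _ _ E (fun u => Rabs (E z - u)) _ (locally 0)); [exact HE |].
    apply (continuous_comp (fun u => E z - u) Rabs); [| apply continuous_Rabs].
    apply (ex_derive_continuous (fun u => E z - u)). auto_derive. auto. }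
  assert (Hbound := filterlim_le (fun y => Rabs (E z - E y)) (fun _ => eps / 2 * z)
    (Rabs (E z - 0)) (eps / 2 * z)
    ltac:(generalize (at_right_0_lt z (proj1 Hz)); apply filter_imp; exact Hmvt)
    Hlim (filterlim_const _)).
  simpl in Hbound. rewrite Rminus_0_r in Hbound.
  rewrite ball_R. rewrite Rminus_0_r. unfold Rdiv. rewrite Rabs_mult, Rabs_inv, (Rabs_right z) by lra.
  apply (Rmult_lt_reg_r z); [lra |]. rewrite Rmult_assoc, Rinv_l, Rmult_1_r by lra.
  destruct eps as [e Hep]. simpl in *. nra.
Qed.

(** * Improper integrals over (0, +oo) *)

Notation is_RInt_0oo f l := (is_RInt_gen f (at_right 0) (Rbar_locally p_infty) l).
Notation RInt_0oo f := (RInt_gen f (at_right 0) (Rbar_locally p_infty)).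

Lemma filter_prod_0oo :
  filter_prod (at_right 0) (Rbar_locally p_infty) (fun ab => 0 < fst ab < 1 /\ 1 < snd ab).
Proof.
  apply (Filter_prod _ _ _ (fun x => 0 < x < 1) (fun x => 1 < x)).
  - apply at_right_0_lt; lra.
  - exists 1; auto.
  - simpl; tauto.
Qed.

Lemma is_RInt_0oo_ext (f g : R -> R) (l : R) :
  (forall x, 0 < x -> f x = g x) -> is_RInt_0oo f l -> is_RInt_0oo g l.
Proof.
  intros Hfg. apply is_RInt_gen_ext.
  generalize filter_prod_0oo. apply filter_imp. intros [a b] [Ha Hb] x Hx; simpl in *.
  rewrite Rmin_left, Rmax_right in Hx by lra. apply Hfg; lra.
Qed.

Lemma is_RInt_0oo_unique (f : R -> R) (l : R) : is_RInt_0oo f l -> RInt_0oo f = l.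
Proof. apply (is_RInt_gen_unique (V := R_CompleteNormedModule)). Qed.

Lemma is_RInt_0oo_unique_eq (f : R -> R) (l1 l2 : R) :
  is_RInt_0oo f l1 -> is_RInt_0oo f l2 -> l1 = l2.
Proof. intros H1 H2. now rewrite <- (is_RInt_0oo_unique f l1 H1), (is_RInt_0oo_unique f l2 H2). Qed.

Lemma is_RInt_0oo_plus (f g : R -> R) (lf lg : R) :
  is_RInt_0oo f lf -> is_RInt_0oo g lg -> is_RInt_0oo (fun x => f x + g x) (lf + lg).
Proof. apply (is_RInt_gen_plus (V := R_NormedModule)). Qed.

Lemma is_RInt_0oo_minus (f g : R -> R) (lf lg : R) :
  is_RInt_0oo f lf -> is_RInt_0oo g lg -> is_RInt_0oo (fun x => f x - g x) (lf - lg).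
Proof. apply (is_RInt_gen_minus (V := R_NormedModule)). Qed.

Lemma is_RInt_0oo_scal (c : R) (f : R -> R) (l : R) :
  is_RInt_0oo f l -> is_RInt_0oo (fun x => c * f x) (c * l).
Proof. apply (is_RInt_gen_scal (V := R_NormedModule)). Qed.

Lemma is_RInt_0oo_Rabs_le (f g : R -> R) (lf lg : R) :
  (forall x, 0 < x -> Rabs (f x) <= g x) ->
  is_RInt_0oo f lf -> is_RInt_0oo g lg -> Rabs lf <= lg.
Proof.
  intros Hfg. apply (RInt_gen_norm (V := R_CompleteNormedModule)).
  - generalize filter_prod_0oo. apply filter_imp. intros [a b]; simpl; lra.
  - generalize filter_prod_0oo. apply filter_imp. intros [a b] [Ha Hb] x Hx; simpl in *.
    apply Hfg; lra.
Qed.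

Lemma is_RInt_0oo_ge0 (f : R -> R) (l : R) :
  (forall x, 0 < x -> 0 <= f x) -> is_RInt_0oo f l -> 0 <= l.
Proof.
  intros Hf Hl. pose proof (Rabs_pos l).
  assert (Rabs l <= l) by (apply (is_RInt_0oo_Rabs_le f f l l); auto;
    intros x Hx; rewrite Rabs_right; [lra | apply Rle_ge, Hf, Hx]).
  lra.
Qed.

Lemma is_RInt_0oo_le (f g : R -> R) (lf lg : R) :
  (forall x, 0 < x -> f x <= g x) -> is_RInt_0oo f lf -> is_RInt_0oo g lg -> lf <= lg.
Proof.
  intros Hfg Hf Hg.
  enough (0 <= lg - lf) by lra.
  apply (is_RInt_0oo_ge0 (fun x => g x - f x)); [| now apply is_RInt_0oo_minus].
  intros x Hx. specialize (Hfg x Hx). lra.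
Qed.

Lemma is_RInt_0oo_primitive (f G : R -> R) (l0 loo : R) :
  (forall a b, 0 < a -> a < b -> is_RInt f a b (G b - G a)) ->
  filterlim G (at_right 0) (locally l0) -> filterlim G (Rbar_locally p_infty) (locally loo) ->
  is_RInt_0oo f (loo - l0).
Proof.
  intros HG H0 Hoo.
  apply (filterlimi_lim_ext_loc (fun ab => G (snd ab) - G (fst ab))).
  - generalize filter_prod_0oo. apply filter_imp. intros [a b] [Ha Hb]; simpl in *.
    apply HG; lra.
  - replace (loo - l0) with (loo + -1 * l0) by ring.
    apply (filterlim_ext (fun ab => G (snd ab) + -1 * G (fst ab))); [intros; ring |].
    apply filterlim_Rplus; [| apply filterlim_Rmult_l]; eapply filterlim_comp;
      [apply filterlim_snd | exact Hoo | apply filterlim_fst | exact H0].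
Qed.

Lemma is_RInt_0oo_derive (f F : R -> R) (l0 loo : R) :
  (forall x, 0 < x -> is_derive F x (f x) /\ continuous f x) ->
  filterlim F (at_right 0) (locally l0) -> filterlim F (Rbar_locally p_infty) (locally loo) ->
  is_RInt_0oo f (loo - l0).
Proof.
  intros HF. apply is_RInt_0oo_primitive. intros a b Ha Hab.
  apply (is_RInt_derive F f a b); intros x Hx;
    rewrite Rmin_left, Rmax_right in Hx by lra; apply HF; lra.
Qed.

Lemma filterlimi_imp {T U : Type} (F : (T -> Prop) -> Prop) {FF : Filter F}
  (G : (U -> Prop) -> Prop) (g1 g2 : T -> U -> Prop) :
  F (fun x => forall y, g1 x y -> g2 x y) -> filterlimi g1 F G -> filterlimi g2 F G.
Proof.
  intros Himp H P HP. specialize (H P HP). unfold filtermapi in *.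
  generalize (filter_and _ _ Himp H). apply filter_imp.
  intros x [H1 [y [H2 H3]]]. exists y; auto.
Qed.

Lemma is_RInt_0oo_comp_incr (f phi dphi : R -> R) (l : R) :
  (forall x, 0 < x -> continuous f x) ->
  (forall u, 0 < u -> 0 < phi u /\ is_derive phi u (dphi u) /\ continuous dphi u) ->
  filterlim phi (at_right 0) (at_right 0) ->
  filterlim phi (Rbar_locally p_infty) (Rbar_locally p_infty) ->
  is_RInt_0oo f l -> is_RInt_0oo (fun u => dphi u * f (phi u)) l.
Proof.
  intros Hf Hphi H0 Hoo Hl.
  assert (Hends : filterlim (fun ab : R * R => (phi (fst ab), phi (snd ab)))
    (filter_prod (at_right 0) (Rbar_locally p_infty))
    (filter_prod (at_right 0) (Rbar_locally p_infty))).
  { apply filterlim_pair; eapply filterlim_comp;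
      [apply filterlim_fst | exact H0 | apply filterlim_snd | exact Hoo]. }
  refine (filterlimi_imp _ _ _ _ _ (filterlimi_comp _ _ _ _ _ _ _ _ Hends Hl)).
  generalize filter_prod_0oo. apply filter_imp. intros [a b] [Ha Hb] v Hv; simpl in *.
  assert (Hc := is_RInt_comp f phi dphi a b).
  rewrite Rmin_left, Rmax_right, (is_RInt_unique f _ _ v Hv) in Hc by lra.
  apply (is_RInt_ext (fun u => scal (dphi u) (f (phi u)))); [easy |].
  apply Hc; intros x Hx; [apply Hf |]; apply Hphi; lra.
Qed.

Lemma is_RInt_0oo_comp_decr (f phi dphi : R -> R) (l : R) :
  (forall x, 0 < x -> continuous f x) ->
  (forall u, 0 < u -> 0 < phi u /\ is_derive phi u (dphi u) /\ continuous dphi u) ->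
  filterlim phi (at_right 0) (Rbar_locally p_infty) ->
  filterlim phi (Rbar_locally p_infty) (at_right 0) ->
  is_RInt_0oo f l -> is_RInt_0oo (fun u => - dphi u * f (phi u)) l.
Proof.
  intros Hf Hphi H0 Hoo Hl.
  assert (Hends : filterlim (fun ab : R * R => (phi (snd ab), phi (fst ab)))
    (filter_prod (at_right 0) (Rbar_locally p_infty))
    (filter_prod (at_right 0) (Rbar_locally p_infty))).
  { apply filterlim_pair; eapply filterlim_comp;
      [apply filterlim_snd | exact Hoo | apply filterlim_fst | exact H0]. }
  refine (filterlimi_imp _ _ _ _ _ (filterlimi_comp _ _ _ _ _ _ _ _ Hends Hl)).
  generalize filter_prod_0oo. apply filter_imp. intros [a b] [Ha Hb] v Hv; simpl in *.
  assert (Hc := is_RInt_comp f phi dphi a b).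
  rewrite Rmin_left, Rmax_right in Hc by lra.
  assert (Hv' : is_RInt f (phi a) (phi b) (- v)) by exact (is_RInt_swap f _ _ v Hv).
  rewrite (is_RInt_unique f _ _ _ Hv') in Hc.
  assert (Hopp := is_RInt_opp (V := R_NormedModule) _ a b (- v)
    (Hc ltac:(intros x Hx; apply Hf, Hphi; lra) ltac:(intros x Hx; apply Hphi; lra))).
  replace v with (opp (- v) : R) by (unfold opp; simpl; ring).
  exact (is_RInt_ext _ _ a b _ (fun x _ => Ropp_mult_distr_l (dphi x) (f (phi x))) Hopp).
Qed.

Definition RInt_dominated (f M : R -> R) :=
  forall a b, 0 < a -> a <= b -> ex_RInt f a b /\ Rabs (RInt f a b) <= M b - M a.

Definition has_limits_0oo (M : R -> R) := exists m0 moo : R,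
  filterlim M (at_right 0) (locally m0) /\ filterlim M (Rbar_locally p_infty) (locally moo).

(* A Cauchy-type sufficient condition for the convergence of the improper integral; it is stable under
   sums, scalar multiples and domination. *)
Definition integrable_0oo (f : R -> R) := exists M, RInt_dominated f M /\ has_limits_0oo M.

Lemma RInt_dominated_Rabs (f M : R -> R) : RInt_dominated f M ->
  forall x y, 0 < x -> 0 < y -> ex_RInt f x y /\ Rabs (RInt f x y) <= Rabs (M y - M x).
Proof.
  intros HM x y Hx Hy. destruct (Rle_lt_dec x y) as [Hxy | Hyx].
  - destruct (HM x y Hx Hxy) as [Hex Hle]. split; [exact Hex |].
    eapply Rle_trans; [exact Hle | apply Rle_abs].
  - destruct (HM y x Hy (Rlt_le _ _ Hyx)) as [Hex Hle]. split; [now apply ex_RInt_swap |].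
    rewrite <- opp_RInt_swap by exact Hex. unfold opp; simpl.
    rewrite Rabs_Ropp, Rabs_minus_sym. eapply Rle_trans; [exact Hle | apply Rle_abs].
Qed.

Lemma filterlim_of_Rabs_le_cauchy {F : (R -> Prop) -> Prop} {FF : ProperFilter F}
  (G M : R -> R) (m : R) :
  F (fun x => 0 < x) ->
  (forall x y, 0 < x -> 0 < y -> Rabs (G y - G x) <= Rabs (M y - M x)) ->
  filterlim M F (locally m) -> exists l, filterlim G F (locally l).
Proof.
  intros Hpos HGM HM. apply (filterlim_locally_cauchy (U := R_CompleteSpace)).
  intros eps. assert (He : 0 < eps / 2) by (destruct eps; simpl; lra).
  exists (fun x => 0 < x /\ Rabs (M x - m) < eps / 2). split.
  - generalize (filter_and _ _ Hpos (proj1 (filterlim_locally _ _) HM (mkposreal _ He))).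
    apply filter_imp. intros x [Hx Hb]. split; [exact Hx | exact Hb].
  - intros u v [Hu Mu] [Hv Mv]. rewrite ball_R.
    eapply Rle_lt_trans; [now apply HGM |].
    replace (M v - M u) with ((M v - m) - (M u - m)) by ring.
    eapply Rle_lt_trans; [apply Rabs_triang |]. rewrite Rabs_Ropp. lra.
Qed.

Lemma integrable_0oo_RInt (f : R -> R) : integrable_0oo f -> is_RInt_0oo f (RInt_0oo f).
Proof.
  intros [M [HM [m0 [moo [H0 Hoo]]]]].
  set (G := fun x => RInt f 1 x : R).
  assert (HG : forall x y, 0 < x -> 0 < y -> is_RInt f x y (G y - G x)).
  { intros x y Hx Hy. replace (G y - G x) with (RInt f x y : R).
    - apply (RInt_correct (V := R_CompleteNormedModule)).
      apply (RInt_dominated_Rabs f M HM); lra.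
    - unfold G. rewrite <- (RInt_Chasles f 1 x y) by (apply (RInt_dominated_Rabs f M HM); lra).
      unfold plus; simpl. lra. }
  assert (HGM : forall x y, 0 < x -> 0 < y -> Rabs (G y - G x) <= Rabs (M y - M x)).
  { intros x y Hx Hy. rewrite <- (is_RInt_unique f x y _ (HG x y Hx Hy)).
    apply (RInt_dominated_Rabs f M HM); lra. }
  destruct (filterlim_of_Rabs_le_cauchy (F := at_right 0) G M m0) as [l0 Hl0]; auto.
  { generalize (at_right_0_lt 1 Rlt_0_1). apply filter_imp. tauto. }
  destruct (filterlim_of_Rabs_le_cauchy (F := Rbar_locally p_infty) G M moo) as [loo Hloo]; auto.
  { exists 0. auto. }
  rewrite (is_RInt_0oo_unique f (loo - l0));
    apply (is_RInt_0oo_primitive f G); auto; intros a b Ha Hab; apply HG; lra.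
Qed.

Lemma integrable_0oo_plus (f g : R -> R) :
  integrable_0oo f -> integrable_0oo g -> integrable_0oo (fun x => f x + g x).
Proof.
  intros [M [HM [m0 [moo [H0 Hoo]]]]] [N [HN [n0 [noo [K0 Koo]]]]].
  exists (fun x => M x + N x). split.
  - intros a b Ha Hab. destruct (HM a b Ha Hab) as [Ef Bf], (HN a b Ha Hab) as [Eg Bg].
    split; [now apply (ex_RInt_plus f g) |].
    rewrite (RInt_plus f g) by assumption.
    eapply Rle_trans; [apply Rabs_triang | lra].
  - exists (m0 + n0), (moo + noo). split; now apply filterlim_Rplus.
Qed.

Lemma integrable_0oo_scal (c : R) (f : R -> R) :
  integrable_0oo f -> integrable_0oo (fun x => c * f x).
Proof.
  intros [M [HM [m0 [moo [H0 Hoo]]]]].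
  exists (fun x => Rabs c * M x). split.
  - intros a b Ha Hab. destruct (HM a b Ha Hab) as [Ef Bf].
    split; [now apply (ex_RInt_scal f a b c) |].
    replace (RInt (fun x => c * f x) a b) with (c * RInt f a b)
      by (symmetry; apply (RInt_scal f a b c); exact Ef).
    rewrite Rabs_mult.
    replace (Rabs c * M b - Rabs c * M a) with (Rabs c * (M b - M a)) by ring.
    apply Rmult_le_compat_l; [apply Rabs_pos | exact Bf].
  - exists (Rabs c * m0), (Rabs c * moo). split; now apply filterlim_Rmult_l.
Qed.

Lemma integrable_0oo_dominated (f g : R -> R) :
  (forall x, 0 < x -> continuous f x /\ Rabs (f x) <= g x) ->
  integrable_0oo g -> integrable_0oo f.
Proof.
  intros Hfg [M [HM HMlim]]. exists M. split; [| exact HMlim].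
  intros a b Ha Hab. destruct (HM a b Ha Hab) as [Eg Bg].
  assert (Ef : ex_RInt f a b).
  { apply (ex_RInt_continuous (V := R_CompleteNormedModule)). intros z Hz.
    rewrite Rmin_left, Rmax_right in Hz by auto. apply Hfg; lra. }
  split; [exact Ef |].
  eapply Rle_trans; [| exact Bg]. eapply Rle_trans; [| apply Rle_abs].
  apply (norm_RInt_le f g a b _ _ Hab); try apply (RInt_correct (V := R_CompleteNormedModule));
    auto; intros x Hx; apply Hfg; lra.
Qed.

Lemma RInt_Rabs_le_primitive (f m Mf : R -> R) (a b : R) : a <= b ->
  (forall x, a <= x <= b ->
    continuous f x /\ continuous m x /\ is_derive Mf x (m x) /\ Rabs (f x) <= m x) ->
  ex_RInt f a b /\ Rabs (RInt f a b) <= Mf b - Mf a.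
Proof.
  intros Hab H.
  assert (Ef : ex_RInt f a b).
  { apply (ex_RInt_continuous (V := R_CompleteNormedModule)). intros z Hz.
    rewrite Rmin_left, Rmax_right in Hz by auto. apply H; auto. }
  split; [exact Ef |].
  apply (norm_RInt_le f m a b _ _ Hab); [intros x Hx; apply H; auto | |].
  - apply (RInt_correct (V := R_CompleteNormedModule)), Ef.
  - apply (is_RInt_derive (V := R_CompleteNormedModule)); intros x Hx;
      rewrite Rmin_left, Rmax_right in Hx by auto; apply H; auto.
Qed.

Lemma integrable_0oo_of_primitive_bounds (f m1 m2 M1 M2 : R -> R) (m0 moo : R) :
  (forall x, 0 < x -> continuous f x) ->
  (forall x, 0 < x <= 1 -> continuous m1 x /\ is_derive M1 x (m1 x) /\ Rabs (f x) <= m1 x) ->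
  (forall x, 1 <= x -> continuous m2 x /\ is_derive M2 x (m2 x) /\ Rabs (f x) <= m2 x) ->
  filterlim M1 (at_right 0) (locally m0) -> filterlim M2 (Rbar_locally p_infty) (locally moo) ->
  integrable_0oo f.
Proof.
  intros Hc H1 H2 HM1 HM2.
  exists (fun x => if Rle_dec x 1 then M1 x - M1 1 else M2 x - M2 1). split.
  - assert (P1 : forall a b, 0 < a -> a <= b -> b <= 1 ->
      ex_RInt f a b /\ Rabs (RInt f a b) <= M1 b - M1 a).
    { intros a b Ha Hab Hb. apply (RInt_Rabs_le_primitive f m1 M1); auto.
      intros x Hx. split; [apply Hc; lra | apply H1; lra]. }
    assert (P2 : forall a b, 1 <= a -> a <= b ->
      ex_RInt f a b /\ Rabs (RInt f a b) <= M2 b - M2 a).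
    { intros a b Ha Hab. apply (RInt_Rabs_le_primitive f m2 M2); auto.
      intros x Hx. split; [apply Hc; lra | apply H2; lra]. }
    intros a b Ha Hab.
    destruct (Rle_dec b 1) as [Hb | Hb]; destruct (Rle_dec a 1) as [Ha1 | Ha1]; try lra.
    + destruct (P1 a b) as [E B]; auto. split; [exact E | lra].
    + destruct (P1 a 1) as [E1 B1], (P2 1 b) as [E2 B2]; try lra.
      split; [eapply ex_RInt_Chasles; eauto |].
      rewrite <- (RInt_Chasles f a 1 b) by auto. unfold plus; simpl.
      eapply Rle_trans; [apply Rabs_triang | lra].
    + destruct (P2 a b) as [E B]; try lra. split; [exact E | lra].
  - exists (m0 - M1 1), (moo - M2 1). split.
    + apply (filterlim_ext_loc (fun x => M1 x + - M1 1)).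
      * generalize (at_right_0_lt 1 Rlt_0_1). apply filter_imp. intros x Hx.
        destruct (Rle_dec x 1); [ring | lra].
      * apply filterlim_Rplus; [exact HM1 | apply filterlim_const].
    + apply (filterlim_ext_loc (fun x => M2 x + - M2 1)).
      * exists 1. intros x Hx. destruct (Rle_dec x 1); [lra | ring].
      * apply filterlim_Rplus; [exact HM2 | apply filterlim_const].
Qed.

Lemma is_RInt_0oo_ge_RInt (f : R -> R) (l a b : R) :
  (forall x, 0 < x -> 0 <= f x /\ continuous f x) -> 0 < a -> a < b ->
  is_RInt_0oo f l -> RInt f a b <= l.
Proof.
  intros Hf Ha Hab Hl. apply Rnot_lt_le. intros Hlt.
  assert (He : 0 < RInt f a b - l) by lra.
  assert (Hex : forall x y, 0 < x -> 0 < y -> ex_RInt f x y).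
  { intros x y Hx Hy. apply (ex_RInt_continuous (V := R_CompleteNormedModule)).
    intros z Hz. apply Hf. pose proof (Rmin_glb_lt x y 0 Hx Hy). lra. }
  destruct (Hl (ball l (mkposreal _ He)) (locally_ball _ _)) as [Q S [d Hd] [N HN] HQS].
  set (a' := Rmin a d / 2). set (b' := Rmax b N + 1).
  assert (Ha' : 0 < a' < a).
  { unfold a'. pose proof (cond_pos d). pose proof (Rmin_l a d). pose proof (Rmin_r a d).
    pose proof (Rmin_glb_lt a d 0 Ha (cond_pos d)). lra. }
  assert (Hb' : b < b' /\ N < b') by (unfold b'; pose proof (Rmax_l b N); pose proof (Rmax_r b N); lra).
  assert (HQ : Q a').
  { apply Hd; [| lra]. rewrite ball_R. rewrite Rminus_0_r, Rabs_right by lra.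
    unfold a'. pose proof (cond_pos d). pose proof (Rmin_r a d). lra. }
  destruct (HQS a' b' HQ (HN b' (proj2 Hb'))) as [y [Hy1 Hy2]]. simpl in *.
  rewrite ball_R in Hy2. rewrite <- (is_RInt_unique f a' b' y Hy1) in Hy2.
  assert (E : RInt f a' b' = RInt f a' a + RInt f a b + RInt f b b').
  { rewrite <- (RInt_Chasles f a' a b'), <- (RInt_Chasles f a b b') by (apply Hex; lra).
    unfold plus; simpl; ring. }
  assert (0 <= RInt f a' a) by (apply RInt_ge_0; [lra | apply Hex; lra | intros; apply Hf; lra]).
  assert (0 <= RInt f b b') by (apply RInt_ge_0; [lra | apply Hex; lra | intros; apply Hf; lra]).
  pose proof (Rle_abs (RInt f a' b' - l)). lra.
Qed.

Lemma is_derive_of_quadratic_remainder (I : R -> R) (z dI C d : R) :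
  0 < d -> (forall h, Rabs h < d -> Rabs (I (z + h) - I z - h * dI) <= h ^ 2 * C) ->
  is_derive I z dI.
Proof.
  intros Hd HI. apply is_derive_Reals. intros eps Heps.
  assert (HC : 0 < Rabs C + 1) by (pose proof (Rabs_pos C); lra).
  assert (Hd' : 0 < Rmin d (eps / (Rabs C + 1)))
    by (apply Rmin_glb_lt; [exact Hd | apply Rdiv_lt_0_compat; lra]).
  exists (mkposreal _ Hd'). intros h Hh0 Hh; simpl in Hh.
  pose proof (Rmin_l d (eps / (Rabs C + 1))). pose proof (Rmin_r d (eps / (Rabs C + 1))).
  specialize (HI h ltac:(lra)).
  assert (Hh' : 0 < Rabs h) by (apply Rabs_pos_lt; exact Hh0).
  replace ((I (z + h) - I z) / h - dI) with ((I (z + h) - I z - h * dI) / h) by (field; auto).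
  unfold Rdiv. rewrite Rabs_mult, Rabs_inv.
  apply (Rmult_lt_reg_r (Rabs h)); [exact Hh' |]. rewrite Rmult_assoc, Rinv_l, Rmult_1_r by lra.
  assert (Heps' : Rabs h * (Rabs C + 1) < eps).
  { assert (Hh2 : Rabs h < eps / (Rabs C + 1)) by lra.
    apply (Rmult_lt_compat_r (Rabs C + 1)) in Hh2; [| lra].
    replace (eps / (Rabs C + 1) * (Rabs C + 1)) with eps in Hh2 by (field; lra). exact Hh2. }
  replace (h ^ 2) with (Rabs h * Rabs h) in HI by (rewrite <- Rabs_mult, Rabs_right; [ring | nra]).
  pose proof (Rle_abs C). nra.
Qed.

Lemma is_derive_RInt_0oo (f : R -> R -> R) (df g I : R -> R) (z dI lg d : R) :
  0 < d -> (forall h, Rabs h < d -> is_RInt_0oo (f (z + h)) (I (z + h))) ->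
  is_RInt_0oo df dI -> is_RInt_0oo g lg ->
  (forall h t, Rabs h < d -> 0 < t -> Rabs (f (z + h) t - f z t - h * df t) <= h ^ 2 * g t) ->
  is_derive I z dI.
Proof.
  intros Hd HI Hdf Hg Hrem.
  assert (Hz : is_RInt_0oo (f z) (I z))
    by (rewrite <- (Rplus_0_r z); apply HI; rewrite Rabs_R0; exact Hd).
  apply (is_derive_of_quadratic_remainder I z dI lg d Hd). intros h Hh.
  apply (is_RInt_0oo_Rabs_le (fun t => f (z + h) t - f z t - h * df t) (fun t => h ^ 2 * g t)).
  - intros t Ht. now apply Hrem.
  - apply is_RInt_0oo_minus; [apply is_RInt_0oo_minus; auto | now apply is_RInt_0oo_scal].
  - now apply is_RInt_0oo_scal.
Qed.

Lemma exp_le_exp (x y : R) : x <= y -> exp x <= exp y.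
Proof. intros [H | ->]; [left; now apply exp_increasing | lra]. Qed.

Lemma exp_neg_le_1 (x : R) : 0 <= x -> exp (- x) <= 1.
Proof. intros Hx. rewrite <- exp_0. apply exp_le_exp. lra. Qed.

Lemma ln_le_sub_1 (u : R) : 0 < u -> ln u <= u - 1.
Proof. intros Hu. pose proof (exp_ineq1_le (ln u)) as Hexp. rewrite exp_ln in Hexp; lra. Qed.

Lemma Rpower_pos (x y : R) : 0 < Rpower x y.
Proof. apply exp_pos. Qed.

Lemma pow_mul_exp_neg_le (n : nat) (x : R) : 0 <= x -> x ^ n * exp (- x) <= INR n ^ n.
Proof.
  intros Hx. destruct n as [| k]; [simpl; rewrite Rmult_1_l; now apply exp_neg_le_1 |].
  set (m := INR (S k)). assert (Hm : 0 < m) by apply lt_0_INR, Nat.lt_0_succ.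
  assert (Hpow : (x / m) ^ S k <= exp x).
  { replace (exp x) with (exp (x / m) ^ S k).
    - apply pow_incr. split; [apply Rdiv_le_0_compat; lra |].
      pose proof (exp_ineq1_le (x / m)). lra.
    - rewrite <- Rpower_pow by apply exp_pos. unfold Rpower. rewrite ln_exp.
      f_equal. fold m. field. lra. }
  replace (x ^ S k) with (m ^ S k * (x / m) ^ S k)
    by (rewrite <- Rpow_mult_distr; f_equal; field; lra).
  pose proof (pow_lt m (S k) Hm). pose proof (exp_pos (- x)).
  rewrite Rmult_assoc. rewrite <- (Rmult_1_r (m ^ S k)) at 2.
  apply Rmult_le_compat_l; [lra |].
  rewrite <- (Rinv_r (exp x)) by (apply Rgt_not_eq, exp_pos).
  rewrite exp_Ropp. apply Rmult_le_compat_r; [left; apply Rinv_0_lt_compat, exp_pos | exact Hpow].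
Qed.

Lemma exp_neg_div_pow_le (n : nat) (z t : R) :
  0 < z -> 0 < t -> exp (- (z / t)) / t ^ n <= INR n ^ n / z ^ n.
Proof.
  intros Hz Ht. pose proof (pow_lt z n Hz) as Hzn. pose proof (pow_lt t n Ht) as Htn.
  pose proof (pow_mul_exp_neg_le n (z / t) ltac:(apply Rlt_le, Rdiv_lt_0_compat; lra)) as Hb.
  unfold Rdiv at 1 in Hb. rewrite Rpow_mult_distr, pow_inv in Hb.
  apply (Rmult_le_reg_l (z ^ n)); [lra |].
  replace (z ^ n * (exp (- (z / t)) / t ^ n)) with (z ^ n / t ^ n * exp (- (z / t))) by (field; lra).
  replace (z ^ n * (INR n ^ n / z ^ n)) with (INR n ^ n) by (field; lra).
  exact Hb.
Qed.

Lemma Rabs_exp_sub_1_sub_le (x : R) : Rabs (exp x - 1 - x) <= x ^ 2 * exp (Rabs x).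
Proof.
  destruct (Req_dec x 0) as [-> | Hx].
  { rewrite exp_0, Rabs_R0. replace (1 - 1 - 0) with 0 by ring. rewrite Rabs_R0.
    simpl. lra. }
  destruct (MVT_cor4 (fun y => exp y - y) (fun y => exp y - 1) 0 (Rabs x)) with (b := x)
    as [c [Hc1 Hc2]].
  { intros c _. auto_derive; auto. ring. }
  { rewrite Rminus_0_r; lra. }
  destruct (MVT_cor4 exp exp 0 (Rabs c)) with (b := c) as [d [Hd1 Hd2]].
  { intros d _. apply is_derive_Reals, derivable_pt_lim_exp. }
  { rewrite Rminus_0_r; lra. }
  rewrite exp_0, !Rminus_0_r in *.
  replace (exp x - 1 - x) with ((exp x - x) - 1) by ring. rewrite Hc1, Hd1, !Rabs_mult.
  rewrite (Rabs_right (exp d)) by (left; apply exp_pos).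
  assert (exp d <= exp (Rabs x)) by (apply exp_le_exp; pose proof (Rle_abs d); lra).
  replace (x ^ 2) with (Rabs x * Rabs x) by (rewrite <- Rabs_mult, Rabs_right; [ring | nra]).
  pose proof (Rabs_pos c). pose proof (Rabs_pos x). pose proof (exp_pos d).
  assert (exp d * Rabs c <= exp (Rabs x) * Rabs x) by (apply Rmult_le_compat; lra).
  nra.
Qed.

Lemma Rabs_ln_le_Rpower (c t : R) :
  0 < c -> 0 < t -> Rabs (ln t) <= (Rpower t c + Rpower t (- c)) / c.
Proof.
  intros Hc Ht.
  pose proof (ln_le_sub_1 (Rpower t c) (Rpower_pos _ _)) as Hp.
  pose proof (ln_le_sub_1 (Rpower t (- c)) (Rpower_pos _ _)) as Hn.
  rewrite ln_Rpower in Hp, Hn.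
  apply (Rmult_le_reg_l c); [exact Hc |].
  replace (c * ((Rpower t c + Rpower t (- c)) / c)) with (Rpower t c + Rpower t (- c)) by (field; lra).
  rewrite <- (Rabs_right c) at 1 by lra. rewrite <- Rabs_mult.
  apply Rabs_le. pose proof (Rpower_pos t c). pose proof (Rpower_pos t (- c)). lra.
Qed.

Lemma exp_Rabs_mul_ln_le (h c t : R) :
  Rabs h <= c -> 0 < t -> exp (Rabs (h * ln t)) <= Rpower t c + Rpower t (- c).
Proof.
  intros Hh Ht. pose proof (Rpower_pos t c). pose proof (Rpower_pos t (- c)).
  rewrite Rabs_mult.
  assert (Hle : Rabs h * Rabs (ln t) <= c * Rabs (ln t))
    by (apply Rmult_le_compat_r; [apply Rabs_pos | exact Hh]).
  unfold Rpower. destruct (Rle_dec 0 (ln t)).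
  - rewrite (Rabs_right (ln t)) in Hle |- * by lra.
    assert (exp (Rabs h * ln t) <= exp (c * ln t)) by (apply exp_le_exp; lra).
    pose proof (exp_pos (- c * ln t)). lra.
  - rewrite (Rabs_left (ln t)) in Hle |- * by lra.
    assert (exp (Rabs h * - ln t) <= exp (- c * ln t)) by (apply exp_le_exp; lra).
    pose proof (exp_pos (c * ln t)). lra.
Qed.

Lemma Rpower_le_exp (p : R) : exists K, 0 < K /\ forall t, 1 <= t -> Rpower t p <= K * exp (t / 4).
Proof.
  set (q := Rabs p + 1). assert (Hq : 0 < q) by (unfold q; pose proof (Rabs_pos p); lra).
  exists (exp (q * ln (4 * q))). split; [apply exp_pos |].
  intros t Ht. unfold Rpower. rewrite <- exp_plus. apply exp_le_exp.
  assert (Hl : 0 <= ln t) by (rewrite <- ln_1; apply ln_le; lra).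
  assert (p * ln t <= q * ln t)
    by (apply Rmult_le_compat_r; auto; unfold q; pose proof (Rle_abs p); lra).
  assert (E : ln t = ln (4 * q) + ln (t / (4 * q))).
  { rewrite <- ln_mult by (try apply Rdiv_lt_0_compat; lra). f_equal. field. lra. }
  pose proof (ln_le_sub_1 (t / (4 * q)) ltac:(apply Rdiv_lt_0_compat; lra)).
  assert (q * ln (t / (4 * q)) <= q * (t / (4 * q) - 1)) by (apply Rmult_le_compat_l; lra).
  assert (q * (t / (4 * q) - 1) <= t / 4) by (field_simplify; lra).
  rewrite E in *. nra.
Qed.

Lemma filterlim_Rpower_at_right_0 (s : R) :
  0 < s -> filterlim (fun t => Rpower t s) (at_right 0) (locally 0).
Proof.
  intros Hs. apply filterlim_locally. intros eps.
  generalize (at_right_0_lt (Rpower eps (/ s)) (Rpower_pos _ _)). apply filter_imp. intros x Hx.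
  rewrite ball_R. rewrite Rminus_0_r, Rabs_right by (left; apply Rpower_pos).
  replace (pos eps) with (Rpower (Rpower eps (/ s)) s).
  - apply Rlt_Rpower_l; auto.
  - rewrite Rpower_mult. replace (/ s * s) with 1 by (field; lra). apply Rpower_1, cond_pos.
Qed.

Lemma filterlim_exp_neg_pinfty (c : R) :
  0 < c -> filterlim (fun t => exp (- (c * t))) (Rbar_locally p_infty) (locally 0).
Proof.
  intros Hc. apply filterlim_locally. intros eps.
  exists (- ln eps / c). intros x Hx.
  rewrite ball_R. rewrite Rminus_0_r, Rabs_right by (left; apply exp_pos).
  rewrite <- (exp_ln eps) by apply cond_pos. apply exp_increasing.
  apply (Rmult_lt_compat_l c) in Hx; auto.
  replace (c * (- ln eps / c)) with (- ln eps) in Hx by (field; lra). lra.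
Qed.

Lemma filterlim_Rpower_exp_pinfty (s : R) :
  filterlim (fun t => Rpower t s * exp (- t)) (Rbar_locally p_infty) (locally 0).
Proof.
  destruct (Rpower_le_exp s) as [K [HK Hb]].
  apply (filterlim_0_Rabs_le _ (fun t => K * exp (- (3 / 4 * t)))).
  - exists 1. intros t Ht.
    rewrite Rabs_right by (left; apply Rmult_lt_0_compat; [apply Rpower_pos | apply exp_pos]).
    replace (exp (- (3 / 4 * t))) with (exp (t / 4) * exp (- t))
      by (rewrite <- exp_plus; f_equal; field).
    pose proof (Hb t ltac:(lra)). pose proof (exp_pos (- t)). nra.
  - apply filterlim_Rmult_l_0, filterlim_exp_neg_pinfty. lra.
Qed.

Lemma filterlim_Rpower_exp_at_right_0 (s : R) :
  0 < s -> filterlim (fun t => Rpower t s * exp (- t)) (at_right 0) (locally 0).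
Proof.
  intros Hs. apply (filterlim_0_Rabs_le _ (fun t => Rpower t s)).
  - generalize (at_right_0_lt 1 Rlt_0_1). apply filter_imp. intros t Ht.
    rewrite Rabs_right by (left; apply Rmult_lt_0_compat; [apply Rpower_pos | apply exp_pos]).
    pose proof (exp_neg_le_1 t ltac:(lra)). pose proof (Rpower_pos t s). nra.
  - now apply filterlim_Rpower_at_right_0.
Qed.

Lemma exp_neg_div_remainder_le (z h t : R) : 0 < z -> Rabs h < z / 2 -> 0 < t ->
  Rabs (exp (- ((z + h) / t)) - exp (- (z / t)) + h / t * exp (- (z / t)))
    <= h ^ 2 * (exp (- (z / 2 / t)) / t ^ 2).
Proof.
  intros Hz Hh Ht.
  replace (exp (- ((z + h) / t)) - exp (- (z / t)) + h / t * exp (- (z / t)))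
    with (exp (- (z / t)) * (exp (- (h / t)) - 1 - - (h / t)))
    by (replace (- ((z + h) / t)) with (- (z / t) + - (h / t)) by (field; lra); rewrite exp_plus; ring).
  rewrite Rabs_mult, Rabs_right by (left; apply exp_pos).
  pose proof (Rabs_exp_sub_1_sub_le (- (h / t))) as Htaylor.
  rewrite Rabs_Ropp, Rabs_div, (Rabs_right t) in Htaylor by lra.
  replace ((- (h / t)) ^ 2) with (h ^ 2 / t ^ 2) in Htaylor by (field; lra).
  assert (Hexp : exp (- (z / t)) * exp (Rabs h / t) <= exp (- (z / 2 / t))).
  { rewrite <- exp_plus. apply exp_le_exp.
    apply (Rmult_le_reg_r t); [exact Ht |].
    replace ((- (z / t) + Rabs h / t) * t) with (Rabs h - z) by (field; lra).
    replace (- (z / 2 / t) * t) with (- (z / 2)) by (field; lra). lra. }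
  pose proof (exp_pos (- (z / t))).
  assert (0 <= h ^ 2 / t ^ 2) by (apply Rdiv_le_0_compat; [apply pow2_ge_0 | apply pow_lt; lra]).
  apply Rle_trans with (exp (- (z / t)) * (h ^ 2 / t ^ 2 * exp (Rabs h / t))).
  - apply Rmult_le_compat_l; lra.
  - replace (h ^ 2 * (exp (- (z / 2 / t)) / t ^ 2)) with (h ^ 2 / t ^ 2 * exp (- (z / 2 / t)))
      by (field; lra).
    replace (exp (- (z / t)) * (h ^ 2 / t ^ 2 * exp (Rabs h / t)))
      with (h ^ 2 / t ^ 2 * (exp (- (z / t)) * exp (Rabs h / t))) by ring.
    apply Rmult_le_compat_l; lra.
Qed.

Lemma one_sub_exp_neg_le_Rpower (x : R) : 0 < x -> 1 - exp (- x) <= Rpower x (/ 2).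
Proof.
  intros Hx. destruct (Rle_dec x 1) as [H1 | H1].
  - pose proof (exp_ineq1_le (- x)).
    enough (x <= Rpower x (/ 2)) by lra.
    rewrite <- (Rpower_1 x) at 1 by exact Hx. unfold Rpower. apply exp_le_exp.
    assert (ln x <= 0) by (rewrite <- ln_1; apply ln_le; lra). lra.
  - assert (1 <= Rpower x (/ 2)).
    { unfold Rpower. rewrite <- exp_0. apply exp_le_exp.
      assert (0 < ln x) by (rewrite <- ln_1; apply ln_increasing; lra). lra. }
    pose proof (exp_pos (- x)). lra.
Qed.

Lemma one_sub_exp_neg_div_le (w t : R) :
  0 < w -> 0 < t -> 1 - exp (- (w / t)) <= Rpower w (/ 2) * Rpower t (- / 2).
Proof.
  intros Hw Ht. replace (Rpower w (/ 2) * Rpower t (- / 2)) with (Rpower (w / t) (/ 2)).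
  - apply one_sub_exp_neg_le_Rpower, Rdiv_lt_0_compat; lra.
  - unfold Rpower. rewrite <- exp_plus. f_equal.
    unfold Rdiv. rewrite ln_mult, ln_Rinv by (try apply Rinv_0_lt_compat; lra). ring.
Qed.

Lemma filterlim_Rabs_ln_mul_sqrt :
  filterlim (fun w => Rabs (ln w) * Rpower w (/ 2)) (at_right 0) (locally 0).
Proof.
  apply (filterlim_0_Rabs_le _ (fun w => / (/ 4) * (Rpower w (/ 4 + / 2) + Rpower w (- / 4 + / 2)))).
  - generalize (at_right_0_lt 1 Rlt_0_1). apply filter_imp. intros w Hw.
    rewrite Rabs_right by (apply Rle_ge, Rmult_le_pos; [apply Rabs_pos | left; apply Rpower_pos]).
    rewrite !Rpower_plus. pose proof (Rpower_pos w (/ 2)).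
    pose proof (Rabs_ln_le_Rpower (/ 4) w ltac:(lra) ltac:(lra)).
    replace (/ (/ 4) * (Rpower w (/ 4) * Rpower w (/ 2) + Rpower w (- / 4) * Rpower w (/ 2)))
      with ((Rpower w (/ 4) + Rpower w (- / 4)) / / 4 * Rpower w (/ 2)) by (field; lra).
    apply Rmult_le_compat_r; lra.
  - apply filterlim_Rmult_l_0, filterlim_Rplus_0; apply filterlim_Rpower_at_right_0; lra.
Qed.

Lemma filterlim_mul_ln : filterlim (fun w => w * ln w) (at_right 0) (locally 0).
Proof.
  apply (filterlim_0_Rabs_le _ (fun w => Rabs (ln w) * Rpower w (/ 2))).
  - generalize (at_right_0_lt 1 Rlt_0_1). apply filter_imp. intros w Hw.
    rewrite Rabs_mult, (Rabs_right w), Rmult_comm by lra.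
    apply Rmult_le_compat_l; [apply Rabs_pos |].
    rewrite <- (Rpower_1 w) at 1 by lra. unfold Rpower. apply exp_le_exp.
    assert (ln w < 0) by (rewrite <- ln_1; apply ln_increasing; lra). lra.
  - exact filterlim_Rabs_ln_mul_sqrt.
Qed.

(** * The Gamma function *)

Definition gamma_integrand (s t : R) : R := Rpower t (s - 1) * exp (- t).

Lemma gamma_integrand_pos (s t : R) : 0 < gamma_integrand s t.
Proof. apply Rmult_lt_0_compat; [apply Rpower_pos | apply exp_pos]. Qed.

Lemma gamma_integrand_continuous (s x : R) : 0 < x -> continuous (gamma_integrand s) x.
Proof.
  intros Hx. apply (ex_derive_continuous (gamma_integrand s)).
  unfold gamma_integrand, Rpower. auto_derive. exact Hx.
Qed.

Lemma gamma_integrand_1 (t : R) : gamma_integrand 1 t = exp (- t).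
Proof. unfold gamma_integrand, Rpower. rewrite Rminus_diag, Rmult_0_l, exp_0. ring. Qed.

Lemma gamma_integrand_shift (s p t : R) :
  gamma_integrand (s + p) t = gamma_integrand s t * Rpower t p.
Proof.
  unfold gamma_integrand. replace (s + p - 1) with ((s - 1) + p) by ring.
  rewrite Rpower_plus. ring.
Qed.

Lemma integrable_gamma_integrand (s : R) : 0 < s -> integrable_0oo (gamma_integrand s).
Proof.
  intros Hs. destruct (Rpower_le_exp (s - 1)) as [K [HK HKb]].
  apply (integrable_0oo_of_primitive_bounds (gamma_integrand s)
    (fun t => Rpower t (s - 1)) (fun t => K * exp (- (3 / 4 * t)))
    (fun t => / s * Rpower t s) (fun t => - (4 / 3 * K) * exp (- (3 / 4 * t)))
    (/ s * 0) (- (4 / 3 * K) * 0)).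
  - apply gamma_integrand_continuous.
  - intros x Hx. split; [| split].
    + apply (ex_derive_continuous (fun t => Rpower t (s - 1))). unfold Rpower. auto_derive. lra.
    + replace (Rpower x (s - 1)) with (/ s * (s * Rpower x (s - 1))) by (field; lra).
      apply (is_derive_scal (fun t => Rpower t s)), is_derive_Reals, derivable_pt_lim_power. lra.
    + rewrite Rabs_right by (left; apply gamma_integrand_pos). unfold gamma_integrand.
      pose proof (Rpower_pos x (s - 1)). pose proof (exp_neg_le_1 x ltac:(lra)). nra.
  - intros x Hx. split; [| split].
    + apply (ex_derive_continuous (fun t => K * exp (- (3 / 4 * t)))). auto_derive. auto.
    + auto_derive; [auto | field].
    + rewrite Rabs_right by (left; apply gamma_integrand_pos). unfold gamma_integrand.
      pose proof (HKb x Hx). pose proof (exp_pos (- x)).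
      replace (exp (- (3 / 4 * x))) with (exp (x / 4) * exp (- x))
        by (rewrite <- exp_plus; f_equal; field).
      nra.
  - apply filterlim_Rmult_l, filterlim_Rpower_at_right_0, Hs.
  - apply filterlim_Rmult_l, filterlim_exp_neg_pinfty. lra.
Qed.

Lemma is_RInt_Gamma (s : R) : 0 < s -> is_RInt_0oo (gamma_integrand s) (Gamma_fun s).
Proof. intros Hs. apply integrable_0oo_RInt, integrable_gamma_integrand, Hs. Qed.

Lemma Gamma_pos (s : R) : 0 < s -> 0 < Gamma_fun s.
Proof.
  intros Hs. apply Rlt_le_trans with (RInt (gamma_integrand s) 1 2).
  - apply RInt_gt_0; [lra | intros; apply gamma_integrand_pos |].
    intros x Hx. apply gamma_integrand_continuous. lra.
  - apply is_RInt_0oo_ge_RInt; try lra; [| now apply is_RInt_Gamma].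
    intros x Hx. split; [left; apply gamma_integrand_pos | now apply gamma_integrand_continuous].
Qed.

Lemma is_RInt_exp_neg : is_RInt_0oo (fun t => exp (- t)) 1.
Proof.
  replace 1 with (0 - - exp (- 0)) by (rewrite Ropp_0, exp_0; ring).
  apply (is_RInt_0oo_derive _ (fun t => - exp (- t))).
  - intros x Hx. split; [auto_derive; [auto | ring] |].
    apply (ex_derive_continuous (fun t => exp (- t))). auto_derive. auto.
  - apply (filterlim_at_right_0_continuous (fun t => - exp (- t))).
    apply (ex_derive_continuous (fun t => - exp (- t))). auto_derive. auto.
  - apply (filterlim_ext (fun t => -1 * exp (- (1 * t)))); [intros; rewrite Rmult_1_l; ring |].
    apply filterlim_Rmult_l_0, filterlim_exp_neg_pinfty. lra.
Qed.

Lemma Gamma_1 : Gamma_fun 1 = 1.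
Proof.
  change (RInt_0oo (gamma_integrand 1) = 1). apply is_RInt_0oo_unique.
  apply (is_RInt_0oo_ext (fun t => exp (- t))); [intros t _; symmetry; apply gamma_integrand_1 |].
  exact is_RInt_exp_neg.
Qed.

Lemma Gamma_succ (s : R) : 0 < s -> Gamma_fun (s + 1) = s * Gamma_fun s.
Proof.
  intros Hs.
  assert (Hparts : is_RInt_0oo (fun t => gamma_integrand (s + 1) t - s * gamma_integrand s t) (0 - 0)).
  { apply (is_RInt_0oo_derive _ (fun t => -1 * (Rpower t s * exp (- t)))).
    - intros x Hx. split.
      + replace (gamma_integrand (s + 1) x - s * gamma_integrand s x)
          with (-1 * (s * Rpower x (s - 1) * exp (- x) + Rpower x s * - exp (- x)))
          by (unfold gamma_integrand; replace (s + 1 - 1) with s by ring; ring).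
        apply (is_derive_scal (fun t => Rpower t s * exp (- t))).
        apply (is_derive_mult (fun t => Rpower t s) (fun t => exp (- t))).
        * apply is_derive_Reals, derivable_pt_lim_power. exact Hx.
        * auto_derive; [auto | ring].
        * intros; apply Rmult_comm.
      + apply (ex_derive_continuous (fun t => gamma_integrand (s + 1) t - s * gamma_integrand s t)).
        unfold gamma_integrand, Rpower. auto_derive. auto.
    - apply filterlim_Rmult_l_0, filterlim_Rpower_exp_at_right_0, Hs.
    - apply filterlim_Rmult_l_0, filterlim_Rpower_exp_pinfty. }
  assert (Hdiff := is_RInt_0oo_minus _ _ _ _ (is_RInt_Gamma (s + 1) ltac:(lra))
    (is_RInt_0oo_scal s _ _ (is_RInt_Gamma s Hs))).
  pose proof (is_RInt_0oo_unique_eq _ _ _ Hparts Hdiff). lra.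
Qed.

Lemma Gamma_2 : Gamma_fun 2 = 1.
Proof. replace 2 with (1 + 1) by ring. rewrite Gamma_succ, Gamma_1 by lra. ring. Qed.

Definition ln_gamma_majorant (c s t : R) : R :=
  / c * (gamma_integrand (s + c) t + gamma_integrand (s + - c) t).

Lemma Rabs_ln_mul_gamma_integrand_le (c s t : R) : 0 < c -> 0 < t ->
  Rabs (ln t * gamma_integrand s t) <= ln_gamma_majorant c s t.
Proof.
  intros Hc Ht. unfold ln_gamma_majorant.
  rewrite Rabs_mult, (Rabs_right (gamma_integrand s t)), !gamma_integrand_shift
    by (left; apply gamma_integrand_pos).
  pose proof (Rabs_ln_le_Rpower c t Hc Ht). pose proof (gamma_integrand_pos s t).
  replace (/ c * (gamma_integrand s t * Rpower t c + gamma_integrand s t * Rpower t (- c)))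
    with ((Rpower t c + Rpower t (- c)) / c * gamma_integrand s t) by (field; lra).
  apply Rmult_le_compat_r; lra.
Qed.

Lemma integrable_ln_gamma_majorant (c s : R) : 0 < c < s -> integrable_0oo (ln_gamma_majorant c s).
Proof.
  intros Hcs. unfold ln_gamma_majorant.
  apply integrable_0oo_scal, integrable_0oo_plus; apply integrable_gamma_integrand; lra.
Qed.

Lemma filterlim_ln_gamma_majorant_at_right_0 (c s : R) :
  0 < c < s - 1 -> filterlim (ln_gamma_majorant c s) (at_right 0) (locally 0).
Proof.
  intros Hcs. unfold ln_gamma_majorant.
  apply filterlim_Rmult_l_0, filterlim_Rplus_0; apply filterlim_Rpower_exp_at_right_0; lra.
Qed.

Lemma filterlim_ln_gamma_majorant_pinfty (c s : R) :
  filterlim (ln_gamma_majorant c s) (Rbar_locally p_infty) (locally 0).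
Proof.
  unfold ln_gamma_majorant.
  apply filterlim_Rmult_l_0, filterlim_Rplus_0; apply filterlim_Rpower_exp_pinfty.
Qed.

Lemma integrable_ln_gamma_integrand (s : R) :
  0 < s -> integrable_0oo (fun t => ln t * gamma_integrand s t).
Proof.
  intros Hs.
  apply (integrable_0oo_dominated _ (ln_gamma_majorant (s / 2) s)).
  - intros x Hx. split.
    + apply (ex_derive_continuous (fun t => ln t * gamma_integrand s t)).
      unfold gamma_integrand, Rpower. auto_derive. auto.
    + apply Rabs_ln_mul_gamma_integrand_le; lra.
  - apply integrable_ln_gamma_majorant. lra.
Qed.

Definition ln_moment (s : R) : R := RInt_0oo (fun t => ln t * gamma_integrand s t).

Lemma is_RInt_ln_moment (s : R) :
  0 < s -> is_RInt_0oo (fun t => ln t * gamma_integrand s t) (ln_moment s).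
Proof. intros Hs. apply integrable_0oo_RInt, integrable_ln_gamma_integrand, Hs. Qed.

(* With u = t^(s/4): |ln t| <= (4/s) (u + 1/u) and exp |h ln t| <= u + 1/u for |h| <= s/4;
   the majorant is gamma_integrand s t * (4/s)^2 (u + 1/u)^3, expanded. *)
Definition gamma_taylor_majorant (s t : R) : R :=
  (4 / s) ^ 2 * (gamma_integrand (s + 3 * (s / 4)) t + 3 * gamma_integrand (s + s / 4) t
    + 3 * gamma_integrand (s + - (s / 4)) t + gamma_integrand (s + - (3 * (s / 4))) t).

Lemma integrable_gamma_taylor_majorant (s : R) : 0 < s -> integrable_0oo (gamma_taylor_majorant s).
Proof.
  intros Hs. assert (Hint : forall p, - s < p -> integrable_0oo (gamma_integrand (s + p)))
    by (intros p Hp; apply integrable_gamma_integrand; lra).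
  exact (integrable_0oo_scal _ _ (integrable_0oo_plus _ _ (integrable_0oo_plus _ _
    (integrable_0oo_plus _ _ (Hint (3 * (s / 4)) ltac:(lra))
      (integrable_0oo_scal 3 _ (Hint (s / 4) ltac:(lra))))
    (integrable_0oo_scal 3 _ (Hint (- (s / 4)) ltac:(lra)))) (Hint (- (3 * (s / 4))) ltac:(lra)))).
Qed.

Lemma gamma_integrand_remainder_le (s h t : R) : 0 < s -> Rabs h <= s / 4 -> 0 < t ->
  Rabs (gamma_integrand (s + h) t - gamma_integrand s t - h * (ln t * gamma_integrand s t))
  <= h ^ 2 * gamma_taylor_majorant s t.
Proof.
  intros Hs Hh Ht. unfold gamma_taylor_majorant.
  set (c := s / 4). set (u := Rpower t c). set (v := Rpower t (- c)).
  assert (Hc : 0 < c) by (unfold c; lra).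
  assert (Hu : 0 < u) by apply Rpower_pos. assert (Hv : 0 < v) by apply Rpower_pos.
  assert (Huv : u * v = 1) by (unfold u, v; rewrite <- Rpower_plus, Rplus_opp_r; apply Rpower_O, Ht).
  assert (Hcube : gamma_integrand (s + 3 * c) t + 3 * gamma_integrand (s + c) t
      + 3 * gamma_integrand (s + - c) t + gamma_integrand (s + - (3 * c)) t
      = gamma_integrand s t * (u + v) ^ 3).
  { rewrite !gamma_integrand_shift.
    replace (Rpower t (3 * c)) with (u ^ 3)
      by (unfold u; rewrite <- Rpower_pow, Rpower_mult by apply Rpower_pos; f_equal; simpl; ring).
    replace (Rpower t (- (3 * c))) with (v ^ 3)
      by (unfold v; rewrite <- Rpower_pow, Rpower_mult by apply Rpower_pos; f_equal; simpl; ring).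
    fold u v. replace ((u + v) ^ 3) with (u ^ 3 + 3 * u * (u * v) + 3 * v * (u * v) + v ^ 3) by ring.
    rewrite Huv. ring. }
  rewrite Hcube, gamma_integrand_shift.
  replace (gamma_integrand s t * Rpower t h - gamma_integrand s t - h * (ln t * gamma_integrand s t))
    with (gamma_integrand s t * (exp (h * ln t) - 1 - h * ln t)) by (unfold Rpower; ring).
  rewrite Rabs_mult, (Rabs_right (gamma_integrand s t)) by (left; apply gamma_integrand_pos).
  pose proof (gamma_integrand_pos s t) as Hg.
  pose proof (Rabs_exp_sub_1_sub_le (h * ln t)) as Htaylor.
  pose proof (exp_Rabs_mul_ln_le h c t Hh Ht) as Hexp.
  pose proof (Rabs_ln_le_Rpower c t Hc Ht) as Hln. fold u v in Hexp, Hln.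
  assert (Hln2 : ln t ^ 2 <= ((u + v) / c) ^ 2).
  { rewrite <- (pow2_abs (ln t)). apply pow_incr. split; [apply Rabs_pos | exact Hln]. }
  assert (Hsq : (h * ln t) ^ 2 * exp (Rabs (h * ln t)) <= h ^ 2 * (((u + v) / c) ^ 2 * (u + v))).
  { rewrite Rpow_mult_distr, Rmult_assoc. apply Rmult_le_compat_l; [apply pow2_ge_0 |].
    apply Rmult_le_compat; [apply pow2_ge_0 | left; apply exp_pos | exact Hln2 | exact Hexp]. }
  replace (4 / s) with (/ c) by (unfold c; field; lra).
  replace (h ^ 2 * ((/ c) ^ 2 * (gamma_integrand s t * (u + v) ^ 3)))
    with (gamma_integrand s t * (h ^ 2 * (((u + v) / c) ^ 2 * (u + v)))) by (field; lra).
  apply Rmult_le_compat_l; lra.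
Qed.

Lemma is_derive_Gamma (s : R) : 0 < s -> is_derive Gamma_fun s (ln_moment s).
Proof.
  intros Hs.
  apply (is_derive_RInt_0oo gamma_integrand (fun t => ln t * gamma_integrand s t)
    (gamma_taylor_majorant s) Gamma_fun s (ln_moment s) (RInt_0oo (gamma_taylor_majorant s)) (s / 4)).
  - lra.
  - intros h Hh. apply is_RInt_Gamma. pose proof (Rle_abs (- h)). rewrite Rabs_Ropp in *. lra.
  - exact (is_RInt_ln_moment s Hs).
  - exact (integrable_0oo_RInt _ (integrable_gamma_taylor_majorant s Hs)).
  - intros h t Hh Ht. apply gamma_integrand_remainder_le; lra.
Qed.

Lemma filterlim_ln_gamma_integrand_at_right_0 (s : R) :
  1 < s -> filterlim (fun t => ln t * gamma_integrand s t) (at_right 0) (locally 0).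
Proof.
  intros Hs. apply (filterlim_0_Rabs_le _ (ln_gamma_majorant ((s - 1) / 2) s)).
  - generalize (at_right_0_lt 1 Rlt_0_1). apply filter_imp. intros t Ht.
    apply Rabs_ln_mul_gamma_integrand_le; lra.
  - apply filterlim_ln_gamma_majorant_at_right_0. lra.
Qed.

Lemma filterlim_ln_gamma_integrand_pinfty (s : R) :
  filterlim (fun t => ln t * gamma_integrand s t) (Rbar_locally p_infty) (locally 0).
Proof.
  apply (filterlim_0_Rabs_le _ (ln_gamma_majorant 1 s)).
  - exists 0. intros t Ht. apply Rabs_ln_mul_gamma_integrand_le; lra.
  - apply filterlim_ln_gamma_majorant_pinfty.
Qed.

Lemma ln_moment_2 : ln_moment 2 = 1 + ln_moment 1.
Proof.
  assert (Hgint2 : forall t, 0 < t -> -1 * (ln t * gamma_integrand 2 t) = - (t * ln t * exp (- t)))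
    by (intros t Ht; unfold gamma_integrand; replace (2 - 1) with 1 by ring;
        rewrite Rpower_1 by exact Ht; ring).
  assert (Hparts : is_RInt_0oo
      (fun t => ln t * gamma_integrand 2 t - ln t * gamma_integrand 1 t - gamma_integrand 1 t) (0 - 0)).
  { apply (is_RInt_0oo_derive _ (fun t => - (t * ln t * exp (- t)))).
    - intros x Hx. split.
      + unfold gamma_integrand. replace (2 - 1) with 1 by ring. replace (1 - 1) with 0 by ring.
        rewrite Rpower_1, Rpower_O by exact Hx. auto_derive; [exact Hx | field; lra].
      + apply (ex_derive_continuous
          (fun t => ln t * gamma_integrand 2 t - ln t * gamma_integrand 1 t - gamma_integrand 1 t)).
        unfold gamma_integrand, Rpower. auto_derive. repeat split; exact Hx.
    - apply (filterlim_ext_loc (fun t => -1 * (ln t * gamma_integrand 2 t))).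
      + generalize (at_right_0_lt 1 Rlt_0_1). apply filter_imp. intros t Ht. apply Hgint2. lra.
      + apply filterlim_Rmult_l_0, filterlim_ln_gamma_integrand_at_right_0. lra.
    - apply (filterlim_ext_loc (fun t => -1 * (ln t * gamma_integrand 2 t))).
      + exists 0. intros t Ht. now apply Hgint2.
      + apply filterlim_Rmult_l_0, filterlim_ln_gamma_integrand_pinfty. }
  assert (Hdiff := is_RInt_0oo_minus _ _ _ _ (is_RInt_0oo_minus _ _ _ _
    (is_RInt_ln_moment 2 ltac:(lra)) (is_RInt_ln_moment 1 ltac:(lra))) (is_RInt_Gamma 1 ltac:(lra))).
  rewrite Gamma_1 in Hdiff. pose proof (is_RInt_0oo_unique_eq _ _ _ Hparts Hdiff). lra.
Qed.

Lemma digamma_1_add_digamma_2 : digamma 1 + digamma 2 = 1 + 2 * ln_moment 1.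
Proof.
  unfold digamma. rewrite Gamma_1, Gamma_2.
  rewrite (is_derive_unique _ _ _ (is_derive_Gamma 1 ltac:(lra))).
  rewrite (is_derive_unique _ _ _ (is_derive_Gamma 2 ltac:(lra))), ln_moment_2. field.
Qed.

(** * The unit-mean K-distribution near the origin *)

Lemma integrable_exp_neg_dominated (f : R -> R) (C : R) :
  (forall x, 0 < x -> continuous f x /\ Rabs (f x) <= C * exp (- x)) -> integrable_0oo f.
Proof.
  intros Hf. apply (integrable_0oo_dominated f _ Hf), integrable_0oo_scal.
  apply (integrable_0oo_dominated _ (gamma_integrand 1)); [| apply integrable_gamma_integrand; lra].
  intros x Hx. rewrite gamma_integrand_1, Rabs_right by (left; apply exp_pos). split; [| lra].
  apply (ex_derive_continuous (fun t => exp (- t))). auto_derive. auto.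
Qed.

Lemma integrable_ln_exp_neg_dominated (f : R -> R) (C : R) :
  (forall x, 0 < x -> continuous f x /\ Rabs (f x) <= C * (Rabs (ln x) * exp (- x))) ->
  integrable_0oo f.
Proof.
  intros Hf. apply (integrable_0oo_dominated f _ Hf), integrable_0oo_scal.
  apply (integrable_0oo_dominated _ (ln_gamma_majorant (1 / 2) 1)).
  - intros x Hx.
    rewrite Rabs_right by (apply Rle_ge, Rmult_le_pos; [apply Rabs_pos | left; apply exp_pos]).
    split.
    + apply (continuous_mult (fun t => Rabs (ln t)) (fun t => exp (- t))).
      * apply (continuous_comp ln Rabs); [| apply continuous_Rabs].
        apply (ex_derive_continuous ln). auto_derive. exact Hx.
      * apply (ex_derive_continuous (fun t => exp (- t))). auto_derive. auto.
    + rewrite <- gamma_integrand_1, <- (Rabs_right (gamma_integrand 1 x)), <- Rabs_mult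
        by (left; apply gamma_integrand_pos).
      apply Rabs_ln_mul_gamma_integrand_le; lra.
  - apply integrable_ln_gamma_majorant. lra.
Qed.

(* [K_cdf], [K_moment n] and [K_ln_moment] are F, M_n and A of the proof sketch at the top. *)
Definition K_cdf_integrand (z t : R) : R := exp (- t) * (1 - exp (- (z / t))).
Definition K_cdf (z : R) : R := RInt_0oo (K_cdf_integrand z).
Definition K_kernel (z t : R) : R := exp (- t) * exp (- (z / t)).
Definition K_moment (n : nat) (z : R) : R := RInt_0oo (fun t => K_kernel z t / t ^ n).

Lemma K_kernel_pos (z t : R) : 0 < K_kernel z t.
Proof. apply Rmult_lt_0_compat; apply exp_pos. Qed.

Lemma K_kernel_le_exp_neg (z t : R) : 0 <= z -> 0 < t -> K_kernel z t <= exp (- t).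
Proof.
  intros Hz Ht. pose proof (exp_neg_le_1 (z / t) ltac:(apply Rdiv_le_0_compat; lra)).
  pose proof (exp_pos (- t)). unfold K_kernel. nra.
Qed.

Lemma is_RInt_K_moment (n : nat) (z : R) :
  0 < z -> is_RInt_0oo (fun t => K_kernel z t / t ^ n) (K_moment n z).
Proof.
  intros Hz. apply integrable_0oo_RInt, (integrable_exp_neg_dominated _ (INR n ^ n / z ^ n)).
  intros x Hx. pose proof (pow_lt x n Hx). split.
  - apply (ex_derive_continuous (fun t => K_kernel z t / t ^ n)). unfold K_kernel. auto_derive.
    repeat split; lra.
  - rewrite Rabs_right by (apply Rle_ge, Rlt_le, Rdiv_lt_0_compat; [apply K_kernel_pos | lra]).
    unfold K_kernel.
    replace (exp (- x) * exp (- (z / x)) / x ^ n) with (exp (- (z / x)) / x ^ n * exp (- x))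
      by (field; lra).
    apply Rmult_le_compat_r; [left; apply exp_pos | now apply exp_neg_div_pow_le].
Qed.

Lemma is_RInt_K_cdf (z : R) : 0 < z -> is_RInt_0oo (K_cdf_integrand z) (K_cdf z).
Proof.
  intros Hz. apply integrable_0oo_RInt, (integrable_exp_neg_dominated _ 1). intros x Hx. split.
  - apply (ex_derive_continuous (K_cdf_integrand z)). unfold K_cdf_integrand. auto_derive. lra.
  - unfold K_cdf_integrand. pose proof (exp_neg_le_1 (z / x) ltac:(apply Rdiv_le_0_compat; lra)).
    pose proof (exp_pos (- (z / x))). pose proof (exp_pos (- x)).
    rewrite Rabs_right by (apply Rle_ge, Rmult_le_pos; lra). nra.
Qed.

Lemma K_moment_0 (z : R) : 0 < z -> K_moment 0 z = 1 - K_cdf z.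
Proof.
  intros Hz.
  apply (is_RInt_0oo_unique_eq (fun t => K_kernel z t / t ^ 0)); [now apply is_RInt_K_moment |].
  apply (is_RInt_0oo_ext (fun t => exp (- t) - K_cdf_integrand z t)).
  - intros t _. unfold K_cdf_integrand, K_kernel. simpl. field.
  - apply is_RInt_0oo_minus; [exact is_RInt_exp_neg | now apply is_RInt_K_cdf].
Qed.

Lemma is_derive_K_moment (n : nat) (z : R) : 0 < z -> is_derive (K_moment n) z (- K_moment (S n) z).
Proof.
  intros Hz. set (C := INR (S (S n)) ^ S (S n) / (z / 2) ^ S (S n)).
  apply (is_derive_RInt_0oo (fun w t => K_kernel w t / t ^ n) (fun t => - (K_kernel z t / t ^ S n))
    (fun t => C * exp (- t)) (K_moment n) z (- K_moment (S n) z) (C * 1) (z / 2)).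
  - lra.
  - intros h Hh. apply is_RInt_K_moment. pose proof (Rle_abs (- h)). rewrite Rabs_Ropp in *. lra.
  - apply (is_RInt_0oo_ext (fun t => -1 * (K_kernel z t / t ^ S n))); [intros; ring |].
    replace (- K_moment (S n) z) with (-1 * K_moment (S n) z) by ring.
    now apply is_RInt_0oo_scal, is_RInt_K_moment.
  - apply is_RInt_0oo_scal, is_RInt_exp_neg.
  - intros h t Hh Ht. pose proof (pow_lt t n Ht).
    pose proof (exp_neg_div_remainder_le z h t Hz Hh Ht) as Hrem.
    pose proof (exp_neg_div_pow_le (S (S n)) (z / 2) t ltac:(lra) Ht) as Hb. fold C in Hb.
    replace (K_kernel (z + h) t / t ^ n - K_kernel z t / t ^ n - h * - (K_kernel z t / t ^ S n))
      with (exp (- t) / t ^ n * (exp (- ((z + h) / t)) - exp (- (z / t)) + h / t * exp (- (z / t))))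
      by (unfold K_kernel; simpl; field; lra).
    rewrite Rabs_mult, Rabs_right by (apply Rle_ge, Rlt_le, Rdiv_lt_0_compat; [apply exp_pos | lra]).
    assert (0 < exp (- t) / t ^ n) by (apply Rdiv_lt_0_compat; [apply exp_pos | lra]).
    apply Rle_trans with (exp (- t) / t ^ n * (h ^ 2 * (exp (- (z / 2 / t)) / t ^ 2))).
    + apply Rmult_le_compat_l; lra.
    + replace (exp (- t) / t ^ n * (h ^ 2 * (exp (- (z / 2 / t)) / t ^ 2)))
        with (h ^ 2 * exp (- t) * (exp (- (z / 2 / t)) / t ^ S (S n))) by (simpl; field; lra).
      replace (h ^ 2 * (C * exp (- t))) with (h ^ 2 * exp (- t) * C) by ring.
      apply Rmult_le_compat_l; [apply Rmult_le_pos; [apply pow2_ge_0 | left; apply exp_pos] | exact Hb].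
Qed.

Lemma is_derive_K_cdf (z : R) : 0 < z -> is_derive K_cdf z (K_moment 1 z).
Proof.
  intros Hz. apply (is_derive_ext_loc (fun w => 1 - K_moment 0 w)).
  - exists (mkposreal z Hz). intros w Hw. rewrite ball_R in Hw; apply Rabs_def2 in Hw. simpl in Hw.
    change (1 - K_moment 0 w = K_cdf w :> R). rewrite K_moment_0 by lra. ring.
  - replace (K_moment 1 z) with (0 - - K_moment 1 z) by ring.
    apply (is_derive_minus (fun _ => 1) (K_moment 0));
      [apply is_derive_Reals, derivable_pt_lim_const | now apply is_derive_K_moment].
Qed.

Lemma filterlim_K_kernel_at_right_0 (w : R) : 0 < w -> filterlim (K_kernel w) (at_right 0) (locally 0).
Proof.
  intros Hw. apply (filterlim_0_Rabs_le _ (fun t => / w * t)).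
  - generalize (at_right_0_lt 1 Rlt_0_1). apply filter_imp. intros t Ht.
    rewrite Rabs_right by (left; apply K_kernel_pos).
    pose proof (exp_neg_div_pow_le 1 w t Hw ltac:(lra)) as Hb. simpl in Hb.
    pose proof (exp_neg_le_1 t ltac:(lra)). pose proof (exp_pos (- t)). pose proof (exp_pos (- (w / t))).
    apply Rle_trans with (exp (- (w / t))); [unfold K_kernel; nra |].
    apply (Rmult_le_compat_r t) in Hb; [| lra].
    replace (exp (- (w / t)) / (t * 1) * t) with (exp (- (w / t))) in Hb by (field; lra).
    replace (1 * 1 / (w * 1) * t) with (/ w * t) in Hb by (field; lra). exact Hb.
  - apply filterlim_Rmult_l_0, (filterlim_at_right_0_continuous (fun t => t)), continuous_id.
Qed.

Lemma filterlim_K_kernel_pinfty (w : R) :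
  0 <= w -> filterlim (K_kernel w) (Rbar_locally p_infty) (locally 0).
Proof.
  intros Hw. apply (filterlim_0_Rabs_le _ (fun t => exp (- (1 * t)))).
  - exists 0. intros t Ht. rewrite Rabs_right, Rmult_1_l by (left; apply K_kernel_pos).
    now apply K_kernel_le_exp_neg.
  - apply filterlim_exp_neg_pinfty. lra.
Qed.

Lemma K_moment_2 (w : R) : 0 < w -> w * K_moment 2 w = K_moment 0 w.
Proof.
  intros Hw.
  assert (Hparts : is_RInt_0oo (fun t => w * (K_kernel w t / t ^ 2) - K_kernel w t / t ^ 0) (0 - 0)).
  { apply (is_RInt_0oo_derive _ (K_kernel w)).
    - intros x Hx. split.
      + unfold K_kernel. auto_derive; [lra | simpl; unfold Rdiv; field; lra].
      + apply (ex_derive_continuous (fun t => w * (K_kernel w t / t ^ 2) - K_kernel w t / t ^ 0)).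
        unfold K_kernel. auto_derive. repeat split; try lra; intro; nra.
    - now apply filterlim_K_kernel_at_right_0.
    - apply filterlim_K_kernel_pinfty. lra. }
  pose proof (is_RInt_0oo_unique_eq _ _ _ Hparts (is_RInt_0oo_minus _ _ _ _
    (is_RInt_0oo_scal w _ _ (is_RInt_K_moment 2 w Hw)) (is_RInt_K_moment 0 w Hw))).
  lra.
Qed.

Definition K_ln_moment (w : R) : R := RInt_0oo (fun t => ln t * K_kernel w t).
Definition K_ln_moment_dual (w : R) : R := RInt_0oo (fun t => ln t * (w / t ^ 2 * K_kernel w t)).

Lemma is_RInt_K_ln_moment (w : R) : 0 <= w -> is_RInt_0oo (fun t => ln t * K_kernel w t) (K_ln_moment w).
Proof.
  intros Hw. apply integrable_0oo_RInt, (integrable_ln_exp_neg_dominated _ 1). intros x Hx. split.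
  - apply (ex_derive_continuous (fun t => ln t * K_kernel w t)). unfold K_kernel. auto_derive.
    repeat split; lra.
  - rewrite Rmult_1_l, Rabs_mult, (Rabs_right (K_kernel w x)) by (left; apply K_kernel_pos).
    apply Rmult_le_compat_l; [apply Rabs_pos | now apply K_kernel_le_exp_neg].
Qed.

Lemma is_RInt_K_ln_moment_dual (w : R) :
  0 < w -> is_RInt_0oo (fun t => ln t * (w / t ^ 2 * K_kernel w t)) (K_ln_moment_dual w).
Proof.
  intros Hw. apply integrable_0oo_RInt, (integrable_ln_exp_neg_dominated _ (4 / w)). intros x Hx. split.
  - apply (ex_derive_continuous (fun t => ln t * (w / t ^ 2 * K_kernel w t))). unfold K_kernel.
    auto_derive. repeat split; try lra; intro; nra.
  - pose proof (exp_neg_div_pow_le 2 w x Hw Hx) as Hb. simpl in Hb.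
    pose proof (exp_pos (- x)). pose proof (exp_pos (- (w / x))). pose proof (Rabs_pos (ln x)).
    assert (Hwb : 0 <= w * (exp (- (w / x)) / x ^ 2) <= 4 / w).
    { split; [apply Rmult_le_pos; [lra | apply Rdiv_le_0_compat; [lra | nra]] |].
      apply (Rmult_le_compat_l w) in Hb; [| lra].
      replace (w * ((1 + 1) * ((1 + 1) * 1) / (w * (w * 1)))) with (4 / w) in Hb by (field; lra).
      replace (x ^ 2) with (x * (x * 1)) by ring. exact Hb. }
    replace (ln x * (w / x ^ 2 * K_kernel w x)) with (ln x * exp (- x) * (w * (exp (- (w / x)) / x ^ 2)))
      by (unfold K_kernel; field; lra).
    rewrite Rabs_mult, Rabs_mult, (Rabs_right (exp (- x))), (Rabs_right (w * _)) by lra.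
    rewrite Rmult_comm. apply Rmult_le_compat; try lra. apply Rmult_le_pos; lra.
Qed.

Lemma filterlim_ln_mul_K_kernel_at_right_0 (w : R) :
  0 < w -> filterlim (fun t => ln t * K_kernel w t) (at_right 0) (locally 0).
Proof.
  intros Hw. apply (filterlim_0_Rabs_le _ (fun t => (4 / w ^ 2 + 1) * t)).
  - generalize (at_right_0_lt 1 Rlt_0_1). apply filter_imp. intros t Ht.
    pose proof (Rabs_ln_le_Rpower 1 t Rlt_0_1 ltac:(lra)) as Hln.
    rewrite Rpower_Ropp, Rpower_1, Rdiv_1_r in Hln by lra.
    pose proof (exp_neg_div_pow_le 2 w t Hw ltac:(lra)) as Hb. simpl in Hb.
    pose proof (exp_pos (- t)). pose proof (exp_pos (- (w / t))).
    pose proof (exp_neg_le_1 t ltac:(lra)).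
    pose proof (exp_neg_le_1 (w / t) ltac:(apply Rdiv_le_0_compat; lra)).
    assert (He : exp (- (w / t)) / t <= 4 / w ^ 2 * t).
    { apply (Rmult_le_compat_l t) in Hb; [| lra].
      replace (t * (exp (- (w / t)) / (t * (t * 1)))) with (exp (- (w / t)) / t) in Hb by (field; lra).
      replace (t * ((1 + 1) * ((1 + 1) * 1) / (w * (w * 1)))) with (4 / w ^ 2 * t) in Hb by (field; lra).
      exact Hb. }
    rewrite Rabs_mult, (Rabs_right (K_kernel w t)) by (left; apply K_kernel_pos).
    apply Rle_trans with ((t + / t) * exp (- (w / t))).
    + apply Rmult_le_compat; [apply Rabs_pos | left; apply K_kernel_pos | exact Hln |].
      unfold K_kernel. nra.
    + replace ((t + / t) * exp (- (w / t))) with (t * exp (- (w / t)) + exp (- (w / t)) / t)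
        by (field; lra).
      nra.
  - apply filterlim_Rmult_l_0, (filterlim_at_right_0_continuous (fun t => t)), continuous_id.
Qed.

Lemma filterlim_ln_mul_K_kernel_pinfty (w : R) :
  0 <= w -> filterlim (fun t => ln t * K_kernel w t) (Rbar_locally p_infty) (locally 0).
Proof.
  intros Hw. apply (filterlim_0_Rabs_le _ (ln_gamma_majorant 1 1)).
  - exists 0. intros t Ht. eapply Rle_trans; [| apply Rabs_ln_mul_gamma_integrand_le; lra].
    rewrite !Rabs_mult, gamma_integrand_1, (Rabs_right (K_kernel w t)), (Rabs_right (exp (- t)))
      by (left; first [apply K_kernel_pos | apply exp_pos]).
    apply Rmult_le_compat_l; [apply Rabs_pos | now apply K_kernel_le_exp_neg].
  - apply filterlim_ln_gamma_majorant_pinfty.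
Qed.

Lemma K_moment_1_by_parts (w : R) : 0 < w -> K_moment 1 w = K_ln_moment w - K_ln_moment_dual w.
Proof.
  intros Hw.
  assert (Hparts : is_RInt_0oo
      (fun t => K_kernel w t / t ^ 1 + ln t * (w / t ^ 2 * K_kernel w t) - ln t * K_kernel w t) (0 - 0)).
  { apply (is_RInt_0oo_derive _ (fun t => ln t * K_kernel w t)).
    - intros x Hx. split.
      + unfold K_kernel. auto_derive; [lra | simpl; unfold Rdiv; field; lra].
      + apply (ex_derive_continuous
          (fun t => K_kernel w t / t ^ 1 + ln t * (w / t ^ 2 * K_kernel w t) - ln t * K_kernel w t)).
        unfold K_kernel. auto_derive. repeat split; try lra; intro; nra.
    - now apply filterlim_ln_mul_K_kernel_at_right_0.
    - apply filterlim_ln_mul_K_kernel_pinfty. lra. }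
  pose proof (is_RInt_0oo_unique_eq _ _ _ Hparts (is_RInt_0oo_minus _ _ _ _ (is_RInt_0oo_plus _ _ _ _
    (is_RInt_K_moment 1 w Hw) (is_RInt_K_ln_moment_dual w Hw)) (is_RInt_K_ln_moment w ltac:(lra)))).
  lra.
Qed.

Lemma K_ln_moment_inversion (w : R) :
  0 < w -> K_ln_moment w = ln w * K_moment 0 w - K_ln_moment_dual w.
Proof.
  intros Hw.
  assert (Hsubst := is_RInt_0oo_comp_decr (fun t => ln t * K_kernel w t) (fun u => w / u)
    (fun u => - (w / u ^ 2)) (K_ln_moment w)).
  apply (is_RInt_0oo_unique_eq (fun u => - - (w / u ^ 2) * (ln (w / u) * K_kernel w (w / u)))).
  - apply Hsubst.
    + intros x Hx. apply (ex_derive_continuous (fun t => ln t * K_kernel w t)). unfold K_kernel.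
      auto_derive. repeat split; lra.
    + intros u Hu. split; [apply Rdiv_lt_0_compat; lra | split].
      * auto_derive; [lra | field; lra].
      * apply (ex_derive_continuous (fun u => - (w / u ^ 2))). auto_derive. intro; nra.
    + now apply filterlim_Rdiv_at_right_0.
    + now apply filterlim_Rdiv_pinfty.
    + apply is_RInt_K_ln_moment. lra.
  - apply (is_RInt_0oo_ext
      (fun u => ln w * (w * (K_kernel w u / u ^ 2)) - ln u * (w / u ^ 2 * K_kernel w u))).
    + intros u Hu.
      replace (ln (w / u)) with (ln w - ln u)
        by (unfold Rdiv; rewrite ln_mult, ln_Rinv by (try apply Rinv_0_lt_compat; lra); ring).
      unfold K_kernel. replace (w / (w / u)) with u by (field; lra). field. lra.
    + rewrite <- (K_moment_2 w Hw).
      apply is_RInt_0oo_minus; [| now apply is_RInt_K_ln_moment_dual].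
      apply is_RInt_0oo_scal, is_RInt_0oo_scal, is_RInt_K_moment, Hw.
Qed.

Lemma K_moment_1_eq (w : R) :
  0 < w -> K_moment 1 w = 2 * K_ln_moment w - ln w * K_moment 0 w.
Proof.
  intros Hw. rewrite K_moment_1_by_parts by exact Hw.
  pose proof (K_ln_moment_inversion w Hw). lra.
Qed.

Lemma K_cdf_bounds (w : R) : 0 < w -> 0 <= K_cdf w <= Rpower w (/ 2) * Gamma_fun (/ 2).
Proof.
  intros Hw.
  assert (Hint := is_RInt_K_cdf w Hw).
  assert (Hpt : forall t, 0 < t -> 0 <= K_cdf_integrand w t <= Rpower w (/ 2) * gamma_integrand (/ 2) t).
  { intros t Ht. unfold K_cdf_integrand, gamma_integrand. replace (/ 2 - 1) with (- / 2) by field.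
    pose proof (exp_neg_le_1 (w / t) ltac:(apply Rdiv_le_0_compat; lra)).
    pose proof (one_sub_exp_neg_div_le w t Hw Ht). pose proof (exp_pos (- t)). nra. }
  split.
  - apply (is_RInt_0oo_ge0 (K_cdf_integrand w)); [intros t Ht; apply Hpt, Ht | exact Hint].
  - apply (is_RInt_0oo_le (K_cdf_integrand w) (fun t => Rpower w (/ 2) * gamma_integrand (/ 2) t));
      [intros t Ht; apply Hpt, Ht | exact Hint | apply is_RInt_0oo_scal, is_RInt_Gamma; lra].
Qed.

Lemma Rabs_K_ln_moment_sub_le (w : R) : 0 < w ->
  Rabs (K_ln_moment w - ln_moment 1) <=
  Rpower w (/ 2) * RInt_0oo (ln_gamma_majorant (/ 4) (/ 2)).
Proof.
  intros Hw.
  apply (is_RInt_0oo_Rabs_le (fun t => ln t * K_kernel w t - ln t * gamma_integrand 1 t)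
    (fun t => Rpower w (/ 2) * ln_gamma_majorant (/ 4) (/ 2) t)).
  - intros t Ht. eapply Rle_trans; [| apply Rmult_le_compat_l;
      [left; apply Rpower_pos | apply (Rabs_ln_mul_gamma_integrand_le (/ 4) (/ 2) t); lra]].
    replace (ln t * K_kernel w t - ln t * gamma_integrand 1 t)
      with (- (ln t * gamma_integrand (/ 2) t) * ((1 - exp (- (w / t))) * Rpower t (/ 2))).
    2: { assert (E : Rpower t (/ 2 - 1) * Rpower t (/ 2) = 1)
           by (rewrite <- Rpower_plus; replace (/ 2 - 1 + / 2) with 0 by field; apply Rpower_O, Ht).
         unfold K_kernel, gamma_integrand. replace (1 - 1) with 0 by ring. rewrite Rpower_O by lra.
         transitivity
           (- (ln t * exp (- t)) * (1 - exp (- (w / t))) * (Rpower t (/ 2 - 1) * Rpower t (/ 2)));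
           [ring | rewrite E; ring]. }
    rewrite Rabs_mult, Rabs_Ropp, Rmult_comm, Rabs_right.
    2: { pose proof (exp_neg_le_1 (w / t) ltac:(apply Rdiv_le_0_compat; lra)).
         pose proof (Rpower_pos t (/ 2)). apply Rle_ge, Rmult_le_pos; lra. }
    apply Rmult_le_compat_r; [apply Rabs_pos |].
    pose proof (one_sub_exp_neg_div_le w t Hw Ht). pose proof (Rpower_pos t (/ 2)).
    replace (Rpower w (/ 2)) with (Rpower w (/ 2) * Rpower t (- / 2) * Rpower t (/ 2))
      by (rewrite Rmult_assoc, <- Rpower_plus, Rplus_opp_l, Rpower_O by lra; ring).
    apply Rmult_le_compat_r; lra.
  - apply is_RInt_0oo_minus; [apply is_RInt_K_ln_moment; lra | apply is_RInt_ln_moment; lra].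
  - apply is_RInt_0oo_scal, integrable_0oo_RInt, integrable_ln_gamma_majorant. lra.
Qed.

Lemma filterlim_K_cdf : filterlim K_cdf (at_right 0) (locally 0).
Proof.
  apply (filterlim_0_Rabs_le _ (fun w => Gamma_fun (/ 2) * Rpower w (/ 2))).
  - generalize (at_right_0_lt 1 Rlt_0_1). apply filter_imp. intros w Hw.
    destruct (K_cdf_bounds w (proj1 Hw)). rewrite Rabs_right; lra.
  - apply filterlim_Rmult_l_0, filterlim_Rpower_at_right_0. lra.
Qed.

Lemma filterlim_ln_mul_K_cdf : filterlim (fun w => ln w * K_cdf w) (at_right 0) (locally 0).
Proof.
  apply (filterlim_0_Rabs_le _ (fun w => Gamma_fun (/ 2) * (Rabs (ln w) * Rpower w (/ 2)))).
  - generalize (at_right_0_lt 1 Rlt_0_1). apply filter_imp. intros w Hw.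
    destruct (K_cdf_bounds w (proj1 Hw)). rewrite Rabs_mult, (Rabs_right (K_cdf w)) by lra.
    pose proof (Rabs_pos (ln w)).
    replace (Gamma_fun (/ 2) * (Rabs (ln w) * Rpower w (/ 2)))
      with (Rabs (ln w) * (Rpower w (/ 2) * Gamma_fun (/ 2))) by ring.
    apply Rmult_le_compat_l; lra.
  - apply filterlim_Rmult_l_0, filterlim_Rabs_ln_mul_sqrt.
Qed.

Lemma filterlim_K_ln_moment : filterlim (fun w => K_ln_moment w - ln_moment 1) (at_right 0) (locally 0).
Proof.
  apply (filterlim_0_Rabs_le _ (fun w => RInt_0oo (ln_gamma_majorant (/ 4) (/ 2)) * Rpower w (/ 2))).
  - generalize (at_right_0_lt 1 Rlt_0_1). apply filter_imp. intros w Hw.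
    rewrite Rmult_comm. apply Rabs_K_ln_moment_sub_le, Hw.
  - apply filterlim_Rmult_l_0, filterlim_Rpower_at_right_0. lra.
Qed.

Definition K_cdf_remainder (z : R) : R := K_cdf z - z * (1 + 2 * ln_moment 1 - ln z).

Lemma is_derive_K_cdf_remainder (z : R) :
  0 < z -> is_derive K_cdf_remainder z (2 * (K_ln_moment z - ln_moment 1) + ln z * K_cdf z).
Proof.
  intros Hz.
  replace (2 * (K_ln_moment z - ln_moment 1) + ln z * K_cdf z)
    with (K_moment 1 z - (1 * (1 + 2 * ln_moment 1 - ln z) + z * (- / z)))
    by (rewrite K_moment_1_eq, K_moment_0 by exact Hz; field; lra).
  apply (is_derive_minus K_cdf (fun z => z * (1 + 2 * ln_moment 1 - ln z))).
  - now apply is_derive_K_cdf.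
  - auto_derive; [exact Hz | ring].
Qed.

Lemma K_cdf_expansion : filterlim (fun z => K_cdf_remainder z / z) (at_right 0) (locally 0).
Proof.
  apply (filterlim_div_of_derive_at_right_0 K_cdf_remainder
    (fun z => 2 * (K_ln_moment z - ln_moment 1) + ln z * K_cdf z)).
  - exact is_derive_K_cdf_remainder.
  - apply (filterlim_ext (fun z => K_cdf z + (- (1 + 2 * ln_moment 1) * z + z * ln z))).
    + intros z. unfold K_cdf_remainder. ring.
    + apply filterlim_Rplus_0; [exact filterlim_K_cdf |].
      apply filterlim_Rplus_0; [| exact filterlim_mul_ln].
      apply filterlim_Rmult_l_0, (filterlim_at_right_0_continuous (fun t => t)), continuous_id.
  - apply filterlim_Rplus_0;
      [apply filterlim_Rmult_l_0, filterlim_K_ln_moment | exact filterlim_ln_mul_K_cdf].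
Qed.

(** * The generalized-K variance and the approximate outage probability *)

Lemma is_RInt_gamma_pdf_second_moment (k : R) :
  0 < k -> is_RInt_0oo (fun y => y ^ 2 * gamma_pdf k y) ((k + 1) / k).
Proof.
  intros Hk.
  assert (Hscaled : is_RInt_0oo (fun y => k * gamma_integrand (k + 2) (k * y)) (Gamma_fun (k + 2))).
  { apply (is_RInt_0oo_comp_incr (gamma_integrand (k + 2)) (fun y => k * y) (fun _ => k)).
    - apply gamma_integrand_continuous.
    - intros u Hu. split; [nra | split; [auto_derive; [auto | ring] | apply continuous_const]].
    - now apply filterlim_Rmult_at_right_0.
    - now apply filterlim_Rmult_pinfty.
    - apply is_RInt_Gamma. lra. }
  assert (HG : Gamma_fun (k + 2) = (k + 1) * k * Gamma_fun k).
  { replace (k + 2) with ((k + 1) + 1) by ring. rewrite !Gamma_succ by lra. ring. }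
  pose proof (Gamma_pos k Hk).
  replace ((k + 1) / k) with (/ (Gamma_fun k * k ^ 2) * Gamma_fun (k + 2)) by (rewrite HG; field; lra).
  apply (is_RInt_0oo_ext (fun y => / (Gamma_fun k * k ^ 2) * (k * gamma_integrand (k + 2) (k * y))));
    [| now apply is_RInt_0oo_scal].
  intros y Hy. unfold gamma_pdf, gamma_integrand.
  replace (k + 2 - 1) with (k + 1) by ring.
  rewrite <- (Rpower_mult_distr k y), (Rpower_plus k 1 k), Rpower_1 by lra.
  replace (Rpower y (k + 1)) with (Rpower y (k - 1) * y ^ 2)
    by (replace (k + 1) with ((k - 1) + INR 2) by (simpl; ring);
        rewrite Rpower_plus, Rpower_pow by lra; reflexivity).
  field. lra.
Qed.

Lemma genK_variance_eq (k m g : R) :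
  0 < k -> 0 < m -> genK_variance k m g = g ^ 2 * ((k + 1) * (m + 1) / (k * m) - 1).
Proof.
  intros Hk Hm. unfold genK_variance.
  assert (Hinner : forall x, RInt_0oo (fun y => (g * x * y) ^ 2 * gamma_pdf k x * gamma_pdf m y)
    = (g * x) ^ 2 * gamma_pdf k x * ((m + 1) / m)).
  { intros x. apply is_RInt_0oo_unique.
    apply (is_RInt_0oo_ext (fun y => ((g * x) ^ 2 * gamma_pdf k x) * (y ^ 2 * gamma_pdf m y)));
      [intros; ring |].
    now apply is_RInt_0oo_scal, is_RInt_gamma_pdf_second_moment. }
  rewrite (is_RInt_0oo_unique _ (g ^ 2 * ((m + 1) / m) * ((k + 1) / k))); [field; lra |].
  apply (is_RInt_0oo_ext (fun x => g ^ 2 * ((m + 1) / m) * (x ^ 2 * gamma_pdf k x))).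
  - intros x _. rewrite Hinner. ring.
  - now apply is_RInt_0oo_scal, is_RInt_gamma_pdf_second_moment.
Qed.

Lemma genK11_cdf_K_cdf (gd y : R) : genK11_cdf gd y = K_cdf (y / gd).
Proof.
  unfold genK11_cdf, K_cdf, K_cdf_integrand. f_equal. apply functional_extensionality. intros t.
  unfold Rdiv. rewrite Rinv_mult, Rmult_assoc. reflexivity.
Qed.

Lemma Derive_2_K_cdf_affine (b c gd x0 : R) : 0 < gd -> 0 < c -> 0 < b + c * x0 ->
  Derive_n (fun x => K_cdf ((b + c * x) / gd)) 2 x0 = - (c / gd) ^ 2 * K_moment 2 ((b + c * x0) / gd).
Proof.
  intros Hgd Hc Hx0.
  assert (Haff : forall x, is_derive (fun x => (b + c * x) / gd) x (c / gd))
    by (intros x; auto_derive; [lra | field; lra]).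
  change (Derive_n _ 2 x0) with (Derive (Derive (fun x => K_cdf ((b + c * x) / gd))) x0).
  rewrite (Derive_ext_loc _ (fun x => c / gd * K_moment 1 ((b + c * x) / gd))).
  - apply is_derive_unique.
    replace (- (c / gd) ^ 2 * K_moment 2 ((b + c * x0) / gd))
      with (c / gd * (c / gd * - K_moment 2 ((b + c * x0) / gd))) by ring.
    apply (is_derive_scal (fun x => K_moment 1 ((b + c * x) / gd))).
    apply (is_derive_comp (K_moment 1) (fun x => (b + c * x) / gd)); [| apply Haff].
    apply is_derive_K_moment, Rdiv_lt_0_compat; lra.
  - assert (Hd : 0 < (b + c * x0) / c) by (apply Rdiv_lt_0_compat; lra).
    exists (mkposreal _ Hd). intros x Hx. simpl in Hx. rewrite ball_R in Hx. apply Rabs_def2 in Hx.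
    assert (Hpos : 0 < b + c * x).
    { destruct Hx as [_ Hx]. apply (Rmult_lt_compat_l c) in Hx; [| lra].
      replace (c * - ((b + c * x0) / c)) with (- (b + c * x0)) in Hx by (field; lra). nra. }
    apply is_derive_unique.
    apply (is_derive_comp K_cdf (fun x => (b + c * x) / gd)); [| apply Haff].
    apply is_derive_K_cdf, Rdiv_lt_0_compat; lra.
Qed.

Theorem mainTheorem7 (Rs gbar_e ke me : R)
  (HRs : 0 < Rs) (Hge : 0 < gbar_e) (Hke : 0 < ke) (Hme : 0 < me) :
  let lam := Rpower 2 Rs in
  let sigma2 := genK_variance ke me gbar_e in
  let a := lam - 1 + lam * gbar_e in
  let P := fun gd x => genK11_cdf gd (lam - 1 + lam * x) in
  let Ptilde := fun gd => P gd gbar_e + sigma2 / 2 * Derive_n (P gd) 2 gbar_e in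
  let main := fun gd =>
    / gd * ((digamma 1 + digamma 2 - ln (a / gd)) / / a
            - gbar_e ^ 2 * lam ^ 2 * ((ke + 1) * (me + 1) / (ke * me) - 1) / (2 * a)) in
  is_lim (fun gd => (Ptilde gd - main gd) / / gd) p_infty 0.
Proof.
  intros lam sigma2 a P Ptilde main.
  assert (Hlam : 1 < lam) by (unfold lam; rewrite <- (Rpower_O 2) by lra; apply Rpower_lt; lra).
  assert (Ha : 0 < a) by (unfold a; nra).
  assert (HP : forall gd, P gd = fun x => K_cdf ((lam - 1 + lam * x) / gd))
    by (intros gd; apply functional_extensionality; intros x; apply genK11_cdf_K_cdf).
  apply (filterlim_ext_loc (fun gd => a * (K_cdf_remainder (a / gd) / (a / gd))
                                      + sigma2 * lam ^ 2 / (2 * a) * K_cdf (a / gd))).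
  - exists 0. intros gd Hgd. assert (Hz : 0 < a / gd) by (apply Rdiv_lt_0_compat; lra).
    unfold Ptilde, main. rewrite HP, Derive_2_K_cdf_affine by (exact Ha || lra). fold a.
    rewrite digamma_1_add_digamma_2.
    replace (gbar_e ^ 2 * lam ^ 2 * ((ke + 1) * (me + 1) / (ke * me) - 1)) with (sigma2 * lam ^ 2)
      by (unfold sigma2; rewrite genK_variance_eq by assumption; ring).
    replace (K_moment 2 (a / gd)) with ((1 - K_cdf (a / gd)) / (a / gd))
      by (rewrite <- K_moment_0, <- (K_moment_2 (a / gd) Hz) by exact Hz; field; lra).
    unfold K_cdf_remainder. field. lra.
  - apply filterlim_Rplus_0; apply filterlim_Rmult_l_0.
    + apply (filterlim_comp _ _ _ (fun gd => a / gd) (fun z => K_cdf_remainder z / z) _ (at_right 0));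
        [apply filterlim_Rdiv_pinfty, Ha | exact K_cdf_expansion].
    + apply (filterlim_comp _ _ _ (fun gd => a / gd) K_cdf _ (at_right 0));
        [apply filterlim_Rdiv_pinfty, Ha | exact filterlim_K_cdf].
Qed.
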